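(* Let $\Gamma$ be a gain operator on $\ell^\infty_+(\mathcal I)$. Assume there is $\rho\in\mathcal K_\infty$ such that $\Gamma_\rho$ satisfies the $\oplus$-MBI property and, for each $r\ge0$, the point $\sigma_{*,\rho}(r):=\bigoplus_{n=0}^\infty\hat\Gamma_\rho^n(r\mathbf 1)$ is a globally attractive fixed point of the operator $s\mapsto r\mathbf 1\oplus\Gamma_\rho(s)$ (i.e. every trajectory of this operator converges in norm to $\sigma_{*,\rho}(r)$). Then there exists a path of strict decay for $\Gamma$.
   Context: Let $\mathcal I$ be a nonempty countable index set; $\ell^\infty_+(\mathcal I)$ is the cone of nonnegative real families $s=(s_i)_{i\in\mathcal I}$ with $\|s\|:=\sup_i|s_i|<\infty$, ordered componentwise; $\mathbf 1$ is the all-ones vector; $\oplus$ is the componentwise maximum, $\bigoplus$ the componentwise supremum. $\mathcal K_\infty$: continuous strictly increasing unbounded $\gamma:\mathbb R_+\to\mathbb R_+$ with $\gamma(0)=0$, acting on $\ell^\infty_+(\mathcal I)$ componentwise. For $\mathcal J\subset\mathcal I$, $s_{|\mathcal J}$ agrees with $s$ on $\mathcal J$ and is $0$ elsewhere. Gain operator: for each $i$ a finite (possibly empty) $\mathcal I_i\subset\mathcal I\setminus\{i\}$; directed graph $\mathcal G$ with vertices $\mathcal I$ and edges $ji$, $j\in\mathcal I_i$; a pointwise equicontinuous family $\gamma_{ij}\in\mathcal K_\infty$ ($ji\in E(\mathcal G)$); functions $\mu_i:\ell^\infty_+(\mathcal I)\to[0,\infty]$ with (M1) some $\xi\in\mathcal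 K_\infty$ has $\mu_i(0)=0$, $\mu_i(s)\ge\xi(\|s\|)$; (M2) $\mu_i$ monotone; (M3) for each finite $\mathcal J$, $\mu_i$ restricted to vectors vanishing off $\mathcal J$ is finite-valued and continuous; (M4) for each norm-bounded $A$ and $\varepsilon>0$ there is $\delta>0$ with $\sup_i|\mu_i(s_{|\mathcal I_i})-\mu_i(s^0_{|\mathcal I_i})|\le\varepsilon$ whenever $s^0\in A$, $\|s-s^0\|\le\delta$. $\Gamma_i(s):=\mu_i([\gamma_{ij}(s_j)]_{j\in\mathcal I_i})$ (argument zero outside $\mathcal I_i$). $\Gamma_\rho:=(\mathrm{id}+\rho)\circ\Gamma$, $\hat\Gamma_\rho(s):=s\oplus\Gamma_\rho(s)$. A monotone $T$ has the $\oplus$-MBI property if there is $\varphi\in\mathcal K_\infty$ such that for all $s,b$, $s\le b\oplus T(s)$ implies $\|s\|\le\varphi(\|b\|)$. A path of strict decay for $\Gamma$ is a map $\sigma:\mathbb R_+\to\ell^\infty_+(\mathcal I)$ such that: (i) for some $\rho\in\mathcal K_\infty$, $\Gamma_\rho(\sigma(r))\le\sigma(r)$ for all $r\ge0$; (ii) $\varphi_{\min}(r)\mathbf 1\le\sigma(r)\le\varphi_{\max}(r)\mathbf 1$ for some $\varphi_{\min},\varphi_{\max}\in\mathcal K_\infty$; (iii) each $\sigma_i\in\mathcal K_\infty$; (iv) for each compact $K\subset(0,\infty)$ there are $0<l\le L$ with $l|r_1-r_2|\le|\sigma_i^{-1}(r_1)-\sigma_i^{-1}(r_2)|\le L|r_1-r_2|$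 for all $r_1,r_2\in K$, $i\in\mathcal I$. *)

From Stdlib Require Import Reals Rtopology ClassicalEpsilon List.
From Coquelicot Require Import Coquelicot.
Open Scope R_scope.

Section Defs.
Context {I : Type}.

(* K_infinity functions on R_+ (values outside R_+ are irrelevant). *)
Definition Kinf (g : R -> R) : Prop :=
  g 0 = 0 /\
  (forall x, 0 <= x -> forall eps, 0 < eps -> exists delta, 0 < delta /\
     forall y, 0 <= y -> Rabs (y - x) < delta -> Rabs (g y - g x) < eps) /\
  (forall x y, 0 <= x -> x < y -> g x < g y) /\
  (forall M, exists x, 0 <= x /\ M < g x).

Definition linf_pos (s : I -> R) : Prop :=
  (forall i, 0 <= s i) /\ exists C, forall i, Rabs (s i) <= C.

Definition supnorm (s : I -> R) : R :=
  real (Lub_Rbar (fun x => exists i, x = Rabs (s i))).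

Definition vle (s t : I -> R) : Prop := forall i, s i <= t i.
Definition vmax (s t : I -> R) : I -> R := fun i => Rmax (s i) (t i).
Definition vsub (s t : I -> R) : I -> R := fun i => s i - t i.
Definition vconst (r : R) : I -> R := fun _ => r.

Definition restr (J : list I) (s : I -> R) : I -> R :=
  fun k => if excluded_middle_informative (In k J) then s k else 0.

Definition vanish_off (J : list I) (s : I -> R) : Prop :=
  forall k, ~ In k J -> s k = 0.

(* A gain operator is given by the data
   Ii : I -> list I  (the finite sets I_i, edges ji of the graph G),
   gam : I -> I -> R -> R  (gam i j = gamma_ij, relevant for j in I_i),
   mu : I -> (I -> R) -> Rbar  (the functions mu_i, relevant on l^infty_+). *)
Definition gain_operator (Ii : I -> list I) (gam : I -> I -> R -> R)
    (mu : I -> (I -> R) -> Rbar) : Prop :=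
  (forall i, ~ In i (Ii i)) /\
  (forall i j, In j (Ii i) -> Kinf (gam i j)) /\
  (forall r, 0 <= r -> forall eps, 0 < eps -> exists delta, 0 < delta /\
     forall i j, In j (Ii i) -> forall r', 0 <= r' -> Rabs (r' - r) < delta ->
       Rabs (gam i j r' - gam i j r) < eps) /\
  (exists xi, Kinf xi /\ forall i, mu i (vconst 0) = Finite 0 /\
     forall s, linf_pos s -> Rbar_le (Finite (xi (supnorm s))) (mu i s)) /\
  (forall i s1 s2, linf_pos s1 -> linf_pos s2 -> vle s1 s2 ->
     Rbar_le (mu i s1) (mu i s2)) /\
  (forall i (J : list I), forall s, linf_pos s -> vanish_off J s ->
     is_finite (mu i s) /\
     forall eps, 0 < eps -> exists delta, 0 < delta /\
       forall s', linf_pos s' -> vanish_off J s' -> supnorm (vsub s' s) < delta ->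
         Rabs (real (mu i s') - real (mu i s)) < eps) /\
  (forall (A : (I -> R) -> Prop), (exists C, forall s, A s -> linf_pos s /\ supnorm s <= C) ->
     forall eps, 0 < eps -> exists delta, 0 < delta /\
       forall s0 s, A s0 -> linf_pos s -> supnorm (vsub s s0) <= delta ->
         forall i, Rabs (real (mu i (restr (Ii i) s)) - real (mu i (restr (Ii i) s0))) <= eps).

(* Gamma_i(s) = mu_i([gamma_ij(s_j)]_{j in I_i}) ; finite by (M3) *)
Definition Gam (Ii : I -> list I) (gam : I -> I -> R -> R)
    (mu : I -> (I -> R) -> Rbar) (s : I -> R) : I -> R :=
  fun i => real (mu i (fun j => if excluded_middle_informative (In j (Ii i))
                                then gam i j (s j) else 0)).

Definition Gam_rho Ii gam mu (rho : R -> R) (s : I -> R) : I -> R :=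
  fun i => Gam Ii gam mu s i + rho (Gam Ii gam mu s i).

Definition hatGam_rho Ii gam mu (rho : R -> R) (s : I -> R) : I -> R :=
  vmax s (Gam_rho Ii gam mu rho s).

Definition MBI (T : (I -> R) -> (I -> R)) : Prop :=
  exists phi, Kinf phi /\
    forall s b, linf_pos s -> linf_pos b -> vle s (vmax b (T s)) ->
      supnorm s <= phi (supnorm b).

Definition sigma_star_Rbar Ii gam mu rho (r : R) (i : I) : Rbar :=
  Lub_Rbar (fun x => exists n : nat,
     x = Nat.iter n (hatGam_rho Ii gam mu rho) (vconst r) i).

Definition sigma_star Ii gam mu rho (r : R) : I -> R :=
  fun i => real (sigma_star_Rbar Ii gam mu rho r i).

Definition glob_attr_fixed_point (T : (I -> R) -> (I -> R)) (sigma : I -> R) : Prop :=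
  linf_pos sigma /\ T sigma = sigma /\
  forall s0, linf_pos s0 ->
    forall eps, 0 < eps -> exists N : nat, forall n, (N <= n)%nat ->
      supnorm (vsub (Nat.iter n T s0) sigma) < eps.

Definition path_strict_decay Ii gam mu (sigma : R -> I -> R) : Prop :=
  (exists rho, Kinf rho /\
     forall r, 0 <= r -> vle (Gam_rho Ii gam mu rho (sigma r)) (sigma r)) /\
  (exists phimin phimax, Kinf phimin /\ Kinf phimax /\
     forall r, 0 <= r -> forall i, phimin r <= sigma r i <= phimax r) /\
  (forall i, Kinf (fun r => sigma r i)) /\
  (forall K : R -> Prop, Rtopology.compact K -> (forall x, K x -> 0 < x) ->
     exists l L, 0 < l /\ l <= L /\
       forall i r1 r2 t1 t2, K r1 -> K r2 -> 0 <= t1 -> 0 <= t2 ->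
         sigma t1 i = r1 -> sigma t2 i = r2 ->
         (* t_k = sigma_i^{-1}(r_k) *)
         l * Rabs (r1 - r2) <= Rabs (t1 - t2) <= L * Rabs (r1 - r2)).

End Defs.

(* The hypotheses give a path of fixed points s(r) = sigma_star(r) of
   s |-> r1 (+) Gamma_rho(s) with r <= s(r) <= phi(r), the upper bound by the
   MBI property, and Gamma_rho(s(r)) <= s(r).  Global attractivity makes s
   nondecreasing in r and, since Gamma_rho is uniformly continuous on bounded
   sets, continuous in r uniformly in i.  Thus s has all properties of a path
   of strict decay except the regularity of the s_i and of their inverses.

   We replace s by a family sigma that is bi-Lipschitz on compact subsets of
   (0, oo), uniformly in i, and lies just below s: first the largest function
   below s_i whose increments dominate those of a gently, strictly increasing
   piecewise linear function, then its infimal convolution over [t/2, t] with a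
   steep piecewise linear function.  If sigma(t) is close enough to s(t), decay
   survives with rho replaced by rho/2, because Gamma_rho(s(t)) <= s(t) leaves
   the margin rho(Gamma(s(t)))/2. *)

From Stdlib Require Import Reals List Lra Lia ZArith Rtopology ClassicalEpsilon FunctionalExtensionality.
From Coquelicot Require Import Coquelicot.
Open Scope R_scope.

Lemma real_Lub_Rbar_ge (E : R -> Prop) (M x : R) :
  (forall y, E y -> y <= M) -> E x -> x <= real (Lub_Rbar E).
Proof.
  intros HM Hx. destruct (Lub_Rbar_correct E) as [Hub Hlub].
  assert (Hle : Rbar_le (Lub_Rbar E) M) by (apply Hlub; intros y Hy; apply HM, Hy).
  specialize (Hub x Hx). destruct (Lub_Rbar E); simpl in *; tauto.
Qed.

Lemma real_Lub_Rbar_le (E : R -> Prop) (M : R) :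
  (exists x, E x) -> (forall y, E y -> y <= M) -> real (Lub_Rbar E) <= M.
Proof.
  intros [x Hx] HM. destruct (Lub_Rbar_correct E) as [Hub Hlub].
  assert (Hle : Rbar_le (Lub_Rbar E) M) by (apply Hlub; intros y Hy; apply HM, Hy).
  specialize (Hub x Hx). destruct (Lub_Rbar E); simpl in *; tauto.
Qed.

Lemma real_Glb_Rbar_le (E : R -> Prop) (m x : R) :
  (forall y, E y -> m <= y) -> E x -> real (Glb_Rbar E) <= x.
Proof.
  intros Hm Hx. destruct (Glb_Rbar_correct E) as [Hlb Hglb].
  assert (Hge : Rbar_le m (Glb_Rbar E)) by (apply Hglb; intros y Hy; apply Hm, Hy).
  specialize (Hlb x Hx). destruct (Glb_Rbar E); simpl in *; tauto.
Qed.

Lemma real_Glb_Rbar_ge (E : R -> Prop) (m : R) :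
  (exists x, E x) -> (forall y, E y -> m <= y) -> m <= real (Glb_Rbar E).
Proof.
  intros [x Hx] Hm. destruct (Glb_Rbar_correct E) as [Hlb Hglb].
  assert (Hge : Rbar_le m (Glb_Rbar E)) by (apply Hglb; intros y Hy; apply Hm, Hy).
  specialize (Hlb x Hx). destruct (Glb_Rbar E); simpl in *; tauto.
Qed.

Lemma exists_nat_ge (x : R) : exists n : nat, x <= INR n.
Proof.
  destruct (nfloor_ex (Rabs x) (Rabs_pos x)) as [n [_ Hn]].
  exists (S n). rewrite S_INR. pose proof (Rle_abs x). lra.
Qed.

Lemma INR_succ_pos (n : nat) : 0 < INR n + 1.
Proof. pose proof (pos_INR n). lra. Qed.

Lemma list_min_pos (l : list R) (g : R -> R) :
  (forall y, In y l -> 0 < g y) -> exists m, 0 < m /\ forall y, In y l -> m <= g y.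
Proof.
  induction l as [|a l IH]; intros Hpos.
  - exists 1. split; [lra | intros _ []].
  - destruct IH as [m [Hm Hml]]; [intros y Hy; apply Hpos; right; exact Hy |].
    exists (Rmin (g a) m). split; [apply Rmin_pos; auto; apply Hpos; left; reflexivity |].
    intros y [<- | Hy]; [apply Rmin_l |].
    eapply Rle_trans; [apply Rmin_r | auto].
Qed.

Lemma list_abs_bound {A : Type} (l : list A) (u : A -> R) :
  exists C, forall j, In j l -> Rabs (u j) <= C.
Proof.
  induction l as [|a l [C HC]]; [exists 0; intros j [] |].
  exists (Rmax (Rabs (u a)) C). intros j [<- | Hj]; [apply Rmax_l |].
  eapply Rle_trans; [apply HC, Hj | apply Rmax_r].
Qed.

Lemma interval_lebesgue_number (a b : R) (dd : R -> R) : (forall x, 0 < dd x) ->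
  exists m, 0 < m /\ forall x, a <= x <= b ->
    exists z, a <= z <= b /\ Rabs (x - z) < dd z / 2 /\ m <= dd z / 2.
Proof.
  intros Hdd.
  set (fam := mkfamily (fun z => a <= z <= b)
                (fun z x => a <= z <= b /\ Rabs (x - z) < dd z / 2)
                (fun z (hz : exists x, a <= z <= b /\ Rabs (x - z) < dd z / 2) =>
                   match hz with ex_intro _ hx => proj1 hx end)).
  assert (Hcov : covering_open_set (fun c => a <= c <= b) fam).
  { split.
    - intros x Hx. exists x. simpl. split; [exact Hx |].
      rewrite Rminus_diag, Rabs_R0. pose proof (Hdd x). lra.
    - intros z x [Hz Hx]. simpl in *.
      assert (Hpos : 0 < dd z / 2 - Rabs (x - z)) by lra.
      exists (mkposreal _ Hpos). intros y Hy. unfold disc in Hy. simpl in *.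
      split; [exact Hz |].
      replace (y - z) with ((y - x) + (x - z)) by ring.
      pose proof (Rabs_triang (y - x) (x - z)). lra. }
  destruct (compact_P3 a b fam Hcov) as [D [HcovD [l Hl]]].
  destruct (list_min_pos l (fun z => dd z / 2)) as [m [Hm Hml]];
    [intros z _; pose proof (Hdd z); lra |].
  exists m. split; [exact Hm |]. intros x Hx.
  destruct (HcovD x Hx) as [z [[Hz Hxz] HDz]]. simpl in *.
  exists z. split; [exact Hz | split; [exact Hxz | apply Hml, Hl; split; assumption]].
Qed.

Lemma equicontinuous_uniform_on_interval {A : Type} (g : A -> R -> R) (a b : R) :
  (forall x, a <= x <= b -> forall eps, 0 < eps -> exists d, 0 < d /\
     forall y, a <= y <= b -> Rabs (y - x) < d -> forall al, Rabs (g al y - g al x) <= eps) ->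
  forall eps, 0 < eps -> exists d, 0 < d /\
     forall x y, a <= x <= b -> a <= y <= b -> Rabs (x - y) < d ->
       forall al, Rabs (g al x - g al y) <= eps.
Proof.
  intros Hcont eps Heps.
  assert (Hloc : forall z, exists d, 0 < d /\ (a <= z <= b -> forall y, a <= y <= b ->
      Rabs (y - z) < d -> forall al, Rabs (g al y - g al z) <= eps / 2)).
  { intro z. destruct (Rle_dec a z) as [Haz | Haz]; [destruct (Rle_dec z b) as [Hzb | Hzb] |].
    - destruct (Hcont z (conj Haz Hzb) (eps / 2)) as [d [Hd Hd']]; [lra |]. exists d. auto.
    - exists 1. split; [lra | intros; lra].
    - exists 1. split; [lra | intros; lra]. }
  destruct (choice _ Hloc) as [dd Hdd].
  destruct (interval_lebesgue_number a b dd (fun z => proj1 (Hdd z))) as [m [Hm Hleb]].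
  exists m. split; [exact Hm |]. intros x y Hx Hy Hxy al.
  destruct (Hleb x Hx) as [z [Hz [Hxz Hmz]]]. destruct (Hdd z) as [Hdz Hz'].
  assert (Hyz : Rabs (y - z) < dd z).
  { replace (y - z) with ((y - x) + (x - z)) by ring.
    pose proof (Rabs_triang (y - x) (x - z)). rewrite Rabs_minus_sym in Hxy. lra. }
  pose proof (Hz' Hz x Hx ltac:(lra) al) as H1. pose proof (Hz' Hz y Hy Hyz al) as H2.
  apply Rabs_le_between in H1, H2. apply Rabs_le. lra.
Qed.

Lemma bounded_of_bounded_steps (b d : R) :
  0 < d -> exists B, 0 <= B /\ forall g : R -> R, g 0 <= 0 ->
  (forall x y, 0 <= x <= b -> 0 <= y <= b -> Rabs (x - y) <= d -> g y <= g x + 1) ->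
  forall x, 0 <= x <= b -> g x <= B.
Proof.
  intros Hd. destruct (exists_nat_ge (b / d)) as [N HN].
  exists (INR N). split; [apply pos_INR |]. intros g Hg0 Hstep.
  assert (Hind : forall n x, 0 <= x <= b -> x <= INR n * d -> g x <= INR n).
  { induction n as [|n IH]; intros x Hx Hxn.
    - simpl in *. replace x with 0 by lra. exact Hg0.
    - rewrite S_INR in *. pose proof (pos_INR n).
      destruct (Rle_dec x d) as [Hxd | Hxd].
      + assert (g x <= g 0 + 1)
          by (apply Hstep; try lra; rewrite Rminus_0_l, Rabs_Ropp, Rabs_pos_eq; lra).
        lra.
      + assert (g x <= g (x - d) + 1)
          by (apply Hstep; try lra; replace (x - d - x) with (- d) by ring;
              rewrite Rabs_Ropp, Rabs_pos_eq; lra).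
        pose proof (IH (x - d) ltac:(lra) ltac:(lra)). lra. }
  intros x Hx. apply Hind; [exact Hx |].
  assert (b / d * d = b) by (field; lra). nra.
Qed.

Lemma lipschitz_of_local_lipschitz (g : R -> R) (a b L : R) : 0 < a ->
  (forall x y, a <= x -> x <= y -> y <= b -> y <= 3 * x / 2 -> g y - g x <= L * (y - x)) ->
  forall x y, a <= x -> x <= y -> y <= b -> g y - g x <= L * (y - x).
Proof.
  intros Ha Hloc.
  assert (Hind : forall (n : nat) x y, a <= x -> x <= y -> y <= b -> y - x <= INR n * (a / 2) ->
            g y - g x <= L * (y - x)).
  { induction n as [|n IH]; intros x y Hx Hxy Hy Hn.
    - simpl in Hn. replace y with x by lra. lra.
    - rewrite S_INR in Hn. destruct (Rle_dec (y - x) (a / 2)) as [Hs | Hs].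
      + apply Hloc; lra.
      + pose proof (Hloc x (x + a / 2) ltac:(lra) ltac:(lra) ltac:(lra) ltac:(lra)).
        pose proof (IH (x + a / 2) y ltac:(lra) ltac:(lra) Hy ltac:(lra)). lra. }
  intros x y Hx Hxy Hy. destruct (exists_nat_ge ((y - x) / (a / 2))) as [n Hn].
  apply (Hind n); auto. assert ((y - x) / (a / 2) * (a / 2) = y - x) by (field; lra). nra.
Qed.

Lemma compact_in_pos_interval (K : R -> Prop) : compact K -> (forall x, K x -> 0 < x) ->
  exists a b, 0 < a /\ forall x, K x -> a <= x <= b.
Proof.
  intros HK Hpos. destruct (compact_P1 K HK) as [m [M HmM]].
  set (fam := mkfamily (fun y => 0 < y) (fun y x => 0 < y /\ y / 2 < x)
                (fun y (h : exists x, 0 < y /\ y / 2 < x) =>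
                   match h with ex_intro _ hx => proj1 hx end)).
  assert (Hcov : covering_open_set K fam).
  { split.
    - intros x Hx. exists x. simpl. pose proof (Hpos x Hx). lra.
    - intros y z [Hy Hz]. simpl in *. assert (Hp : 0 < z - y / 2) by lra.
      exists (mkposreal _ Hp). intros u Hu. unfold disc in Hu. simpl in *.
      apply Rabs_def2 in Hu. lra. }
  destruct (HK fam Hcov) as [D [HcovD [l Hl]]].
  destruct (list_min_pos l (fun y => y / 2)) as [a [Ha Hal]].
  { intros y Hy. apply Hl in Hy. destruct Hy as [Hy _]. simpl in Hy. lra. }
  exists a, M. split; [exact Ha |]. intros x Hx. split; [| apply HmM, Hx].
  destruct (HcovD x Hx) as [y [[Hy Hyx] HDy]]. simpl in *.
  pose proof (Hal y (proj1 (Hl y) (conj Hy HDy))). lra.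
Qed.

Fixpoint prefix_min (u : nat -> R) (n : nat) : R :=
  match n with O => u O | S m => Rmin (prefix_min u m) (u (S m)) end.

Fixpoint prefix_max (u : nat -> R) (n : nat) : R :=
  match n with O => u O | S m => Rmax (prefix_max u m) (u (S m)) end.

Lemma prefix_min_le (u : nat -> R) (m n : nat) : (m <= n)%nat -> prefix_min u n <= u m.
Proof.
  intros Hmn. induction Hmn as [| n Hmn IH].
  - destruct m; simpl; [lra | apply Rmin_r].
  - simpl. eapply Rle_trans; [apply Rmin_l | exact IH].
Qed.

Lemma prefix_min_pos (u : nat -> R) (n : nat) : (forall k, 0 < u k) -> 0 < prefix_min u n.
Proof. intros Hu. induction n; simpl; [| apply Rmin_pos]; auto. Qed.

Lemma prefix_min_antitone (u : nat -> R) (m n : nat) :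
  (m <= n)%nat -> prefix_min u n <= prefix_min u m.
Proof. intros Hmn. induction Hmn; simpl; [lra | eapply Rle_trans; [apply Rmin_l | auto]]. Qed.

Lemma prefix_max_ge (u : nat -> R) (m n : nat) : (m <= n)%nat -> u m <= prefix_max u n.
Proof.
  intros Hmn. induction Hmn as [| n Hmn IH].
  - destruct m; simpl; [lra | apply Rmax_r].
  - simpl. eapply Rle_trans; [exact IH | apply Rmax_l].
Qed.

Lemma prefix_max_mono (u : nat -> R) (m n : nat) : (m <= n)%nat -> prefix_max u m <= prefix_max u n.
Proof.
  intros Hmn. induction Hmn as [| n Hmn IH]; simpl; [lra |].
  eapply Rle_trans; [exact IH | apply Rmax_l].
Qed.

Lemma Rmax_dist (a b c d : R) : Rabs (Rmax a b - Rmax c d) <= Rabs (a - c) + Rabs (b - d).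
Proof.
  unfold Rmax, Rabs. repeat destruct Rle_dec; repeat destruct Rcase_abs; lra.
Qed.

Lemma mult_le_on_support (m p a : R) : 0 <= a -> (a <> 0 -> m <= p) -> m * a <= p * a.
Proof.
  intros Ha Hmp. destruct (Req_dec a 0) as [-> | Hne]; [lra |].
  apply Rmult_le_compat_r; auto.
Qed.

Lemma sum_geometric_le (N : nat) : sum_f_R0 (fun k => / 2 ^ (k + 3)) N <= / 4.
Proof.
  assert (Hsum : forall n, sum_f_R0 (fun k => / 2 ^ (k + 3)) n = / 4 - / 2 ^ (n + 3)).
  { induction n; simpl; [field |].
    rewrite IHn. replace (S (n + 3)) with (S n + 3)%nat by lia. simpl.
    field. apply pow_nonzero. lra. }
  rewrite Hsum. pose proof (Rinv_0_lt_compat _ (pow_lt 2 (N + 3) ltac:(lra))). lra.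
Qed.

Section Kinf.
Variable g : R -> R.
Hypothesis Hg : Kinf g.

Lemma Kinf_0 : g 0 = 0.
Proof. apply Hg. Qed.

Lemma Kinf_lt x y : 0 <= x -> x < y -> g x < g y.
Proof. apply Hg. Qed.

Lemma Kinf_le x y : 0 <= x -> x <= y -> g x <= g y.
Proof.
  intros Hx Hxy. destruct (Req_dec x y) as [-> | Hne]; [lra |].
  left. apply Kinf_lt; lra.
Qed.

Lemma Kinf_nonneg x : 0 <= x -> 0 <= g x.
Proof. intros Hx. rewrite <- Kinf_0. apply Kinf_le; lra. Qed.

Lemma Kinf_pos x : 0 < x -> 0 < g x.
Proof. intros Hx. rewrite <- Kinf_0. apply Kinf_lt; lra. Qed.

Lemma Kinf_small eps : 0 < eps -> exists d, 0 < d /\ forall x, 0 <= x -> x <= d -> g x <= eps.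
Proof.
  intros Heps. destruct Hg as [H0 [Hcont _]].
  destruct (Hcont 0 (Rle_refl 0) eps Heps) as [d [Hd Hd']].
  exists (d / 2). split; [lra |]. intros x Hx Hxd.
  specialize (Hd' x Hx). rewrite H0, !Rminus_0_r, Rabs_pos_eq in Hd' by lra.
  pose proof (Kinf_nonneg x Hx). rewrite Rabs_pos_eq in Hd' by lra.
  left. apply Hd'. lra.
Qed.

Lemma Kinf_half : Kinf (fun x => g x / 2).
Proof.
  destruct Hg as [H0 [Hcont [Hlt Hunb]]]. split; [rewrite H0; lra |]. split; [| split].
  - intros x Hx eps Heps. destruct (Hcont x Hx (2 * eps)) as [d [Hd Hd']]; [lra |].
    exists d. split; [exact Hd |]. intros y Hy Hyx. specialize (Hd' y Hy Hyx).
    replace (g y / 2 - g x / 2) with ((g y - g x) / 2) by field.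
    rewrite Rabs_div, (Rabs_pos_eq 2) by lra. lra.
  - intros x y Hx Hxy. specialize (Hlt x y Hx Hxy). lra.
  - intros M. destruct (Hunb (2 * M)) as [x [Hx HMx]]. exists x. split; [exact Hx | lra].
Qed.

Lemma Kinf_uniform_continuity (b : R) : 0 <= b -> forall eps, 0 < eps -> exists d, 0 < d /\
  forall x y, 0 <= x <= b -> 0 <= y <= b -> Rabs (x - y) < d -> Rabs (g x - g y) <= eps.
Proof.
  intros Hb eps Heps.
  destruct (equicontinuous_uniform_on_interval (fun (_ : unit) => g) 0 b) with (eps := eps)
    as [d [Hd Hd']]; [| exact Heps |].
  - intros x Hx e He. destruct Hg as [_ [Hc _]]. destruct (Hc x (proj1 Hx) e He) as [d [Hd Hd']].
    exists d. split; [exact Hd |]. intros y Hy Hyx _. left. apply Hd'; auto; lra.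
  - exists d. split; [exact Hd |]. intros x y Hx Hy Hxy. exact (Hd' x y Hx Hy Hxy tt).
Qed.

End Kinf.

Lemma Kinf_id : Kinf (fun x => x).
Proof.
  split; [reflexivity |]. split; [| split].
  - intros x _ eps Heps. exists eps. split; [exact Heps |]. intros. lra.
  - intros. lra.
  - intros M. exists (Rabs M + 1). pose proof (Rabs_pos M). pose proof (Rle_abs M). split; lra.
Qed.

Section SupNorm.
Context {I : Type} (Hne : inhabited I).

Lemma supnorm_ge (s : I -> R) (C : R) : (forall i, Rabs (s i) <= C) ->
  forall i, Rabs (s i) <= supnorm s.
Proof.
  intros HC i. apply (real_Lub_Rbar_ge _ C); [intros y [j ->]; apply HC | exists i; reflexivity].
Qed.

Lemma supnorm_le (s : I -> R) (C : R) : (forall i, Rabs (s i) <= C) -> supnorm s <= C.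
Proof.
  intros HC. destruct Hne as [i0].
  apply real_Lub_Rbar_le; [exists (Rabs (s i0)), i0; reflexivity | intros y [j ->]; apply HC].
Qed.

Lemma supnorm_vconst (r : R) : 0 <= r -> supnorm (vconst (I := I) r) = r.
Proof.
  intros Hr. destruct Hne as [i0].
  assert (Habs : forall i, Rabs (vconst (I := I) r i) = r) by (intro; apply Rabs_pos_eq, Hr).
  apply Rle_antisym.
  - apply supnorm_le. intro i. rewrite Habs. lra.
  - apply Rle_trans with (Rabs (vconst (I := I) r i0)); [rewrite Habs; lra |].
    apply (supnorm_ge _ r). intro i. rewrite Habs. lra.
Qed.

Lemma linf_pos_le_supnorm (s : I -> R) : linf_pos s -> forall i, s i <= supnorm s.
Proof.
  intros [_ [C HC]] i. eapply Rle_trans; [apply Rle_abs | apply (supnorm_ge s C HC)].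
Qed.

End SupNorm.

Definition vnonneg {I : Type} (x : I -> R) : Prop := forall j, 0 <= x j.

Definition bounded_by {I : Type} (b : R) (x : I -> R) : Prop := forall j, 0 <= x j <= b.

Section GainOperator.
Context {I : Type} (Ii : I -> list I) (gam : I -> I -> R -> R) (mu : I -> (I -> R) -> Rbar)
  (HG : gain_operator Ii gam mu).

Lemma gam_Kinf i j : In j (Ii i) -> Kinf (gam i j).
Proof. destruct HG as (_ & H & _). apply H. Qed.

Lemma gam_equicontinuous r : 0 <= r -> forall eps, 0 < eps -> exists d, 0 < d /\
  forall i j, In j (Ii i) -> forall r', 0 <= r' -> Rabs (r' - r) < d ->
    Rabs (gam i j r' - gam i j r) < eps.
Proof. destruct HG as (_ & _ & H & _). apply H. Qed.

Lemma mu_vconst0 i : mu i (vconst 0) = Finite 0.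
Proof. destruct HG as (_ & _ & _ & [xi [_ H]] & _). apply H. Qed.

Lemma mu_le i s1 s2 : linf_pos s1 -> linf_pos s2 -> vle s1 s2 -> Rbar_le (mu i s1) (mu i s2).
Proof. destruct HG as (_ & _ & _ & _ & H & _). apply H. Qed.

Lemma mu_finite i J s : linf_pos s -> vanish_off J s -> is_finite (mu i s).
Proof. destruct HG as (_ & _ & _ & _ & _ & H & _). intros Hs HJ. apply (H i J s Hs HJ). Qed.

Lemma mu_uniform_continuity (A : (I -> R) -> Prop) :
  (exists C, forall s, A s -> linf_pos s /\ supnorm s <= C) ->
  forall eps, 0 < eps -> exists d, 0 < d /\
    forall s0 s, A s0 -> linf_pos s -> supnorm (vsub s s0) <= d ->
    forall i, Rabs (real (mu i (restr (Ii i) s)) - real (mu i (restr (Ii i) s0))) <= eps.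
Proof. destruct HG as (_ & _ & _ & _ & _ & _ & H). apply H. Qed.

Definition gain_arg (i : I) (s : I -> R) : I -> R :=
  fun j => if excluded_middle_informative (In j (Ii i)) then gam i j (s j) else 0.

Lemma Gam_gain_arg s i : Gam Ii gam mu s i = real (mu i (gain_arg i s)).
Proof. reflexivity. Qed.

Lemma gain_arg_vanish_off i s : vanish_off (Ii i) (gain_arg i s).
Proof. intros k Hk. unfold gain_arg. destruct excluded_middle_informative; tauto. Qed.

Lemma restr_gain_arg i s : restr (Ii i) (gain_arg i s) = gain_arg i s.
Proof.
  apply functional_extensionality. intro k. unfold restr, gain_arg.
  repeat destruct excluded_middle_informative; tauto.
Qed.

Lemma gain_arg_linf_pos i s : vnonneg s -> linf_pos (gain_arg i s).
Proof.
  intros Hs. split.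
  - intro j. unfold gain_arg. destruct excluded_middle_informative as [Hj |]; [| lra].
    apply (Kinf_nonneg _ (gam_Kinf i j Hj)), Hs.
  - destruct (list_abs_bound (Ii i) (fun j => gam i j (s j))) as [C HC].
    exists (Rmax C 0). intro j. unfold gain_arg.
    destruct excluded_middle_informative as [Hj |].
    + eapply Rle_trans; [apply HC, Hj | apply Rmax_l].
    + rewrite Rabs_R0. apply Rmax_r.
Qed.

Lemma mu_gain_arg_finite i s : vnonneg s -> is_finite (mu i (gain_arg i s)).
Proof.
  intros Hs. apply (mu_finite i (Ii i)); [apply gain_arg_linf_pos, Hs | apply gain_arg_vanish_off].
Qed.

Lemma Gam_le s s' : vnonneg s -> vle s s' -> forall i, Gam Ii gam mu s i <= Gam Ii gam mu s' i.
Proof.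
  intros Hs Hss' i. rewrite !Gam_gain_arg.
  assert (Hs' : vnonneg s') by (intro j; specialize (Hs j); specialize (Hss' j); lra).
  assert (Harg : vle (gain_arg i s) (gain_arg i s')).
  { intro j. unfold gain_arg. destruct excluded_middle_informative as [Hj |]; [| lra].
    apply (Kinf_le _ (gam_Kinf i j Hj)); auto. }
  pose proof (mu_le i _ _ (gain_arg_linf_pos i s Hs) (gain_arg_linf_pos i s' Hs') Harg) as H.
  rewrite <- (mu_gain_arg_finite i s Hs), <- (mu_gain_arg_finite i s' Hs') in H. exact H.
Qed.

Lemma Gam_vconst0 i : Gam Ii gam mu (vconst 0) i = 0.
Proof.
  rewrite Gam_gain_arg.
  replace (gain_arg i (vconst 0)) with (vconst (I := I) 0).
  - rewrite mu_vconst0. reflexivity.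
  - apply functional_extensionality. intro j. unfold gain_arg, vconst.
    destruct excluded_middle_informative as [Hj |]; [| reflexivity].
    symmetry. apply (Kinf_0 _ (gam_Kinf i j Hj)).
Qed.

Lemma Gam_nonneg s : vnonneg s -> forall i, 0 <= Gam Ii gam mu s i.
Proof.
  intros Hs i. rewrite <- (Gam_vconst0 i). apply Gam_le; [intro; unfold vconst; lra | exact Hs].
Qed.

Lemma gam_uniform_continuity (b : R) : 0 <= b -> forall eps, 0 < eps -> exists d, 0 < d /\
  forall i j, In j (Ii i) -> forall x y, 0 <= x <= b -> 0 <= y <= b -> Rabs (x - y) < d ->
    Rabs (gam i j x - gam i j y) <= eps.
Proof.
  intros Hb eps Heps.
  destruct (equicontinuous_uniform_on_interval
              (fun (p : {p : I * I | In (snd p) (Ii (fst p))}) x =>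
                 gam (fst (proj1_sig p)) (snd (proj1_sig p)) x) 0 b) with (eps := eps)
    as [d [Hd Hd']]; [| exact Heps |].
  - intros x Hx e He. destruct (gam_equicontinuous x (proj1 Hx) e He) as [d [Hd Hd']].
    exists d. split; [exact Hd |]. intros y Hy Hyx [[i j] Hij]. left. apply Hd'; auto; lra.
  - exists d. split; [exact Hd |]. intros i j Hij x y Hx Hy Hxy.
    exact (Hd' x y Hx Hy Hxy (exist _ (i, j) Hij)).
Qed.

Lemma gam_bounded (b : R) : 0 <= b -> exists B, 0 <= B /\ forall i j, In j (Ii i) ->
  forall x, 0 <= x <= b -> gam i j x <= B.
Proof.
  intros Hb. destruct (gam_uniform_continuity b Hb 1) as [d [Hd Hd']]; [lra |].
  destruct (bounded_of_bounded_steps b (d / 2)) as [B [HB0 HB]]; [lra |].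
  exists B. split; [exact HB0 |]. intros i j Hij x Hx. apply (HB (gam i j)); [| | exact Hx].
  - rewrite (Kinf_0 _ (gam_Kinf i j Hij)). lra.
  - intros u v Hu Hv Huv. pose proof (Hd' i j Hij v u Hv Hu) as H.
    rewrite Rabs_minus_sym in Huv. apply Rabs_le_between in H; lra.
Qed.

Lemma Gam_uniform_continuity (b : R) : 0 <= b -> forall eps, 0 < eps -> exists d, 0 < d /\
  forall x y, bounded_by b x -> bounded_by b y -> (forall j, Rabs (x j - y j) <= d) ->
    forall i, Rabs (Gam Ii gam mu x i - Gam Ii gam mu y i) <= eps.
Proof.
  intros Hb eps Heps. destruct (gam_bounded b Hb) as [B [HB0 HB]].
  set (A := fun v => exists i x, bounded_by b x /\ v = gain_arg i x).
  assert (HA : exists C, forall v, A v -> linf_pos v /\ supnorm v <= C).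
  { exists B. intros v [i [x [Hx ->]]].
    split; [apply gain_arg_linf_pos; intro j; apply Hx |].
    apply (supnorm_le (inhabits i)).
    intro j. unfold gain_arg. destruct excluded_middle_informative as [Hj |].
    + rewrite Rabs_pos_eq by (apply (Kinf_nonneg _ (gam_Kinf i j Hj)), Hx). apply HB; auto.
    + rewrite Rabs_R0. exact HB0. }
  destruct (mu_uniform_continuity A HA eps Heps) as [d2 [Hd2 Hd2']].
  destruct (gam_uniform_continuity b Hb d2 Hd2) as [d1 [Hd1 Hd1']].
  exists (d1 / 2). split; [lra |]. intros x y Hx Hy Hxy i.
  assert (Hdist : supnorm (vsub (gain_arg i y) (gain_arg i x)) <= d2).
  { apply (supnorm_le (inhabits i)). intro j. unfold vsub, gain_arg.
    destruct excluded_middle_informative.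
    - apply Hd1'; auto. specialize (Hxy j). rewrite Rabs_minus_sym in Hxy. lra.
    - rewrite Rminus_0_r, Rabs_R0. lra. }
  pose proof (Hd2' (gain_arg i x) (gain_arg i y) (ex_intro _ i (ex_intro _ x (conj Hx eq_refl)))
                (gain_arg_linf_pos i y (fun j => proj1 (Hy j))) Hdist i) as H.
  rewrite !restr_gain_arg in H. rewrite !Gam_gain_arg, Rabs_minus_sym. exact H.
Qed.

Lemma Gam_bounded (b : R) : 0 <= b -> exists B, 0 <= B /\ forall x, bounded_by b x ->
  forall i, Gam Ii gam mu x i <= B.
Proof.
  intros Hb. destruct (Gam_uniform_continuity b Hb 1) as [d [Hd Hd']]; [lra |].
  destruct (bounded_of_bounded_steps b d Hd) as [B [HB0 HB]].
  exists B. split; [exact HB0 |]. intros x Hx i.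
  eapply Rle_trans; [apply (Gam_le x (vconst b)); intro j; apply Hx |].
  apply (HB (fun a => Gam Ii gam mu (vconst a) i)); [rewrite Gam_vconst0; lra | | lra].
  intros u v Hu Hv Huv.
  assert (Hbox : forall a, 0 <= a <= b -> bounded_by b (vconst (I := I) a))
    by (intros a Ha j; exact Ha).
  pose proof (Hd' (vconst v) (vconst u) (Hbox v Hv) (Hbox u Hu)) as H.
  rewrite Rabs_minus_sym in Huv. specialize (H (fun _ => Huv) i).
  apply Rabs_le_between in H. lra.
Qed.

Section GainRho.
Variable rho : R -> R.
Hypothesis Hrho : Kinf rho.

Lemma Gam_rho_vconst0 i : Gam_rho Ii gam mu rho (vconst 0) i = 0.
Proof. unfold Gam_rho. rewrite Gam_vconst0, (Kinf_0 rho Hrho). ring. Qed.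

Lemma Gam_rho_le x y : vnonneg x -> vle x y ->
  forall i, Gam_rho Ii gam mu rho x i <= Gam_rho Ii gam mu rho y i.
Proof.
  intros Hx Hxy i. unfold Gam_rho. pose proof (Gam_le x y Hx Hxy i) as H.
  pose proof (Kinf_le rho Hrho _ _ (Gam_nonneg x Hx i) H). lra.
Qed.

Lemma Gam_rho_bounded (b : R) : 0 <= b -> exists B, forall x, bounded_by b x ->
  forall i, Gam_rho Ii gam mu rho x i <= B.
Proof.
  intros Hb. destruct (Gam_bounded b Hb) as [B [_ HB]].
  exists (B + rho B). intros x Hx i. unfold Gam_rho.
  pose proof (Gam_nonneg x (fun j => proj1 (Hx j)) i) as H.
  pose proof (Kinf_le rho Hrho _ _ H (HB x Hx i)). pose proof (HB x Hx i). lra.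
Qed.

Lemma Gam_rho_uniform_continuity (b : R) : 0 <= b -> forall eps, 0 < eps -> exists d, 0 < d /\
  forall x y, bounded_by b x -> bounded_by b y -> (forall j, Rabs (x j - y j) <= d) ->
    forall i, Rabs (Gam_rho Ii gam mu rho x i - Gam_rho Ii gam mu rho y i) <= eps.
Proof.
  intros Hb eps Heps. destruct (Gam_bounded b Hb) as [B [HB0 HB]].
  destruct (Kinf_uniform_continuity rho Hrho B HB0 (eps / 2)) as [d1 [Hd1 Hd1']]; [lra |].
  destruct (Gam_uniform_continuity b Hb (Rmin (eps / 2) (d1 / 2))) as [d [Hd Hd']].
  { apply Rmin_pos; lra. }
  exists d. split; [exact Hd |]. intros x y Hx Hy Hxy i. unfold Gam_rho.
  pose proof (Hd' x y Hx Hy Hxy i) as HG1.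
  pose proof (Rmin_l (eps / 2) (d1 / 2)). pose proof (Rmin_r (eps / 2) (d1 / 2)).
  pose proof (Hd1' _ _ (conj (Gam_nonneg x (fun j => proj1 (Hx j)) i) (HB x Hx i))
                (conj (Gam_nonneg y (fun j => proj1 (Hy j)) i) (HB y Hy i)) ltac:(lra)) as HG2.
  apply Rabs_le_between in HG1, HG2. apply Rabs_le. lra.
Qed.

Definition T (r : R) (x : I -> R) : I -> R := vmax (vconst r) (Gam_rho Ii gam mu rho x).

Lemma T_ge r x i : r <= T r x i.
Proof. apply Rmax_l. Qed.

Lemma T_le r x y : vnonneg x -> vle x y -> vle (T r x) (T r y).
Proof. intros Hx Hxy i. apply Rle_max_compat_l, Gam_rho_le; auto. Qed.

Lemma T_dist r q x y i :
  Rabs (T r x i - T q y i) <=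
  Rabs (r - q) + Rabs (Gam_rho Ii gam mu rho x i - Gam_rho Ii gam mu rho y i).
Proof. apply Rmax_dist. Qed.

Lemma T_le_param r q x i : r <= q -> T r x i <= T q x i.
Proof. intros Hrq. apply Rle_max_compat_r, Hrq. Qed.

Lemma T_uniform_continuity r b : 0 <= b -> forall eps, 0 < eps -> exists d, 0 < d /\
  forall x y, bounded_by b x -> bounded_by b y -> (forall j, Rabs (x j - y j) <= d) ->
    forall j, Rabs (T r x j - T r y j) <= eps.
Proof.
  intros Hb eps Heps.
  destruct (Gam_rho_uniform_continuity b Hb eps Heps) as [d [Hd Hd']].
  exists d. split; [exact Hd |]. intros x y Hx Hy Hxy j.
  pose proof (T_dist r r x y j). rewrite Rminus_diag, Rabs_R0 in H.
  pose proof (Hd' x y Hx Hy Hxy j). lra.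
Qed.

Lemma T_linf_pos r x : 0 <= r -> linf_pos x -> linf_pos (T r x).
Proof.
  intros Hr [Hx [C HC]].
  assert (Hbox : bounded_by C x)
    by (intro j; split; [apply Hx | eapply Rle_trans; [apply Rle_abs | apply HC]]).
  destruct (Gam_rho_bounded (Rmax C 0) (Rmax_r C 0)) as [B HB].
  split; [intro i; eapply Rle_trans; [exact Hr | apply T_ge] |].
  exists (Rmax r B). intro i. rewrite Rabs_pos_eq by (eapply Rle_trans; [exact Hr | apply T_ge]).
  apply Rle_max_compat_l, HB. intro j.
  split; [apply Hx | eapply Rle_trans; [apply Hbox | apply Rmax_l]].
Qed.

End GainRho.
End GainOperator.

(** * The path of fixed points *)

Lemma iter_almost_fixed {I : Type} (F : (I -> R) -> I -> R) (B : (I -> R) -> Prop) :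
  (forall eps, 0 < eps -> exists d, 0 < d /\ forall x y, B x -> B y ->
     (forall j, Rabs (x j - y j) <= d) -> forall j, Rabs (F x j - F y j) <= eps) ->
  forall n eta, 0 < eta -> exists delta, 0 < delta /\ forall x,
    (forall k, (k <= n)%nat -> B (Nat.iter k F x)) ->
    (forall j, Rabs (F x j - x j) <= delta) -> forall j, Rabs (Nat.iter n F x j - x j) <= eta.
Proof.
  intros Hunif n. induction n as [|n IH]; intros eta Heta.
  - exists eta. split; [exact Heta |]. intros x _ _ j. simpl. rewrite Rminus_diag, Rabs_R0. lra.
  - destruct (Hunif (eta / 2)) as [d [Hd Hd']]; [lra |].
    destruct (IH d Hd) as [delta [Hdelta Hdelta']].
    exists (Rmin delta (eta / 2)). split; [apply Rmin_pos; lra |]. intros x HB Hx j.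
    pose proof (Rmin_l delta (eta / 2)). pose proof (Rmin_r delta (eta / 2)).
    assert (Hn : forall j, Rabs (Nat.iter n F x j - x j) <= d).
    { apply Hdelta'; [intros k Hk; apply HB; lia | intro; eapply Rle_trans; [apply Hx | lra]]. }
    pose proof (Hd' _ _ (HB n (Nat.le_succ_diag_r n)) (HB O (Nat.le_0_l _)) Hn j) as H1.
    specialize (Hx j). simpl in H1 |- *.
    apply Rabs_le_between in H1, Hx. apply Rabs_le. lra.
Qed.

Section FixedPointPath.
Context {I : Type} (Hne : inhabited I) (Ii : I -> list I) (gam : I -> I -> R -> R)
  (mu : I -> (I -> R) -> Rbar) (HG : gain_operator Ii gam mu)
  (rho : R -> R) (Hrho : Kinf rho) (phi : R -> R) (Hphi : Kinf phi)
  (Hmbi : forall s b, linf_pos s -> linf_pos b -> vle s (vmax b (Gam_rho Ii gam mu rho s)) ->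
     supnorm s <= phi (supnorm b))
  (Hfix : forall r, 0 <= r ->
     glob_attr_fixed_point (T Ii gam mu rho r) (sigma_star Ii gam mu rho r)).

Local Notation Tr r := (T Ii gam mu rho r).
Local Notation sstar r := (sigma_star Ii gam mu rho r).

Lemma sstar_linf_pos r : 0 <= r -> linf_pos (sstar r).
Proof. intros Hr. apply (Hfix r Hr). Qed.

Lemma sstar_fixed r : 0 <= r -> Tr r (sstar r) = sstar r.
Proof. intros Hr. apply (Hfix r Hr). Qed.

Lemma T_iter_linf_pos r n x : 0 <= r -> linf_pos x -> linf_pos (Nat.iter n (Tr r) x).
Proof.
  intros Hr Hx. induction n; simpl; [exact Hx | apply (T_linf_pos Ii gam mu HG rho Hrho); auto].
Qed.

Lemma T_iter_le r n x y : 0 <= r -> linf_pos x -> vle x y ->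
  vle (Nat.iter n (Tr r) x) (Nat.iter n (Tr r) y).
Proof.
  intros Hr Hx Hxy. induction n; simpl; [exact Hxy |].
  apply (T_le Ii gam mu HG rho Hrho); [exact (proj1 (T_iter_linf_pos r n x Hr Hx)) | exact IHn].
Qed.

Lemma T_iter_below r n x : 0 <= r -> linf_pos x -> vle (Tr r x) x -> vle (Nat.iter n (Tr r) x) x.
Proof.
  intros Hr Hx Hsup. induction n; simpl; [intro; lra |].
  intro i. eapply Rle_trans; [| apply (Hsup i)].
  apply (T_le Ii gam mu HG rho Hrho); [exact (proj1 (T_iter_linf_pos r n x Hr Hx)) | exact IHn].
Qed.

Lemma sstar_attracts r x : 0 <= r -> linf_pos x -> forall eps, 0 < eps ->
  exists N, forall n, (N <= n)%nat -> forall i, Rabs (Nat.iter n (Tr r) x i - sstar r i) < eps.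
Proof.
  intros Hr Hx eps Heps. destruct (Hfix r Hr) as [_ [_ Hattr]].
  destruct (Hattr x Hx eps Heps) as [N HN]. exists N. intros n Hn i.
  eapply Rle_lt_trans; [| apply (HN n Hn)].
  destruct (T_iter_linf_pos r n x Hr Hx) as [_ [C1 HC1]].
  destruct (sstar_linf_pos r Hr) as [_ [C2 HC2]].
  refine (supnorm_ge (vsub (Nat.iter n (Tr r) x) (sstar r)) (C1 + C2) _ i). intro j.
  unfold vsub, Rminus.
  pose proof (Rabs_triang (Nat.iter n (Tr r) x j) (- sstar r j)). rewrite Rabs_Ropp in *.
  pose proof (HC1 j). pose proof (HC2 j). lra.
Qed.

Lemma sstar_ge r : 0 <= r -> forall i, r <= sstar r i.
Proof. intros Hr i. rewrite <- (sstar_fixed r Hr). apply T_ge. Qed.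

Lemma sstar_decay r : 0 <= r -> forall i, Gam_rho Ii gam mu rho (sstar r) i <= sstar r i.
Proof.
  intros Hr i. apply (Rle_trans _ (Tr r (sstar r) i)); [apply Rmax_r | rewrite sstar_fixed; lra].
Qed.

Lemma sstar_le_phi r : 0 <= r -> forall i, sstar r i <= phi r.
Proof.
  intros Hr i. eapply Rle_trans; [apply linf_pos_le_supnorm, sstar_linf_pos, Hr |].
  replace (phi r) with (phi (supnorm (vconst (I := I) r))) by (rewrite supnorm_vconst; auto).
  apply Hmbi; [apply sstar_linf_pos, Hr | |].
  - split; [intro; exact Hr | exists r; intro; unfold vconst; rewrite Rabs_pos_eq; lra].
  - intro j. pose proof (f_equal (fun v => v j) (sstar_fixed r Hr)) as E.
    simpl in E. unfold T in E. rewrite E. lra.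
Qed.

Lemma sstar_le_of_supersolution r x : 0 <= r -> linf_pos x -> vle (Tr r x) x -> vle (sstar r) x.
Proof.
  intros Hr Hx Hsup i. apply Rnot_lt_le. intros Hlt.
  destruct (sstar_attracts r x Hr Hx (sstar r i - x i)) as [N HN]; [lra |].
  specialize (HN N (Nat.le_refl N) i). pose proof (T_iter_below r N x Hr Hx Hsup i).
  apply Rabs_def2 in HN. lra.
Qed.

Lemma sstar_supersolution r q : 0 <= q -> r <= q -> vle (Tr r (sstar q)) (sstar q).
Proof.
  intros Hq Hrq i. apply (Rle_trans _ (Tr q (sstar q) i)); [apply T_le_param, Hrq |].
  rewrite sstar_fixed by exact Hq. lra.
Qed.

Lemma T_sstar_dist r q j : 0 <= q -> Rabs (Tr r (sstar q) j - sstar q j) <= Rabs (r - q).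
Proof.
  intros Hq. pose proof (T_dist Ii gam mu rho r q (sstar q) (sstar q) j) as H.
  rewrite sstar_fixed, Rminus_diag, Rabs_R0 in H by exact Hq. lra.
Qed.

Lemma sstar_le r q : 0 <= r -> r <= q -> forall i, sstar r i <= sstar q i.
Proof.
  intros Hr Hrq. apply sstar_le_of_supersolution; [exact Hr | apply sstar_linf_pos; lra |].
  apply sstar_supersolution; lra.
Qed.

(* From [s(q)] the map [T r] moves by at most [|q - r|]; iterating it from [s(q)]
   therefore stays close to [s(q)], while it converges to [s(r)] when started
   from [s(0) <= s(q) <= s(r + 1)]. *)
Lemma sstar_continuous r : 0 <= r -> forall eps, 0 < eps -> exists th, 0 < th /\
  forall q, 0 <= q -> Rabs (q - r) < th -> forall i, Rabs (sstar q i - sstar r i) <= eps.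
Proof.
  intros Hr eps Heps.
  destruct (sstar_attracts r (sstar (r + 1)) Hr (sstar_linf_pos (r + 1) ltac:(lra)) (eps / 2))
    as [N1 HN1]; [lra |].
  destruct (sstar_attracts r (sstar 0) Hr (sstar_linf_pos _ (Rle_refl 0)) (eps / 2))
    as [N2 HN2]; [lra |].
  set (N := Nat.max N1 N2).
  assert (Hb : 0 <= phi (r + 1)) by (apply (Kinf_nonneg phi Hphi); lra).
  destruct (iter_almost_fixed (Tr r) (bounded_by (phi (r + 1)))
              (T_uniform_continuity Ii gam mu HG rho Hrho r _ Hb) N (eps / 2))
    as [delta [Hdelta Hdelta']]; [lra |].
  exists (Rmin 1 delta). split; [apply Rmin_pos; lra |]. intros q Hq Hqr i.
  pose proof (Rmin_l 1 delta). pose proof (Rmin_r 1 delta). apply Rabs_def2 in Hqr as Hqr'.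
  destruct Hqr' as [Hqr1 Hqr2].
  assert (Hbelow : forall n, vle (Nat.iter n (Tr r) (sstar q)) (sstar (r + 1))).
  { intros n j. apply (Rle_trans _ (Nat.iter n (Tr r) (sstar (r + 1)) j)).
    - apply T_iter_le; [exact Hr | apply sstar_linf_pos, Hq | intro; apply sstar_le; lra].
    - apply T_iter_below; [exact Hr | apply sstar_linf_pos; lra | apply sstar_supersolution; lra]. }
  assert (Hclose : forall j, Rabs (Nat.iter N (Tr r) (sstar q) j - sstar q j) <= eps / 2).
  { apply Hdelta'.
    - intros k _ j. split.
      + pose proof (proj1 (T_iter_linf_pos r k _ Hr (sstar_linf_pos q Hq)) j). lra.
      + eapply Rle_trans; [apply Hbelow | apply sstar_le_phi; lra].
    - intro j. pose proof (T_sstar_dist r q j Hq). rewrite Rabs_minus_sym in Hqr. lra. }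
  pose proof (T_iter_le r N (sstar q) (sstar (r + 1)) Hr (sstar_linf_pos q Hq)
                (fun j => sstar_le q (r + 1) Hq ltac:(lra) j) i) as Hup.
  pose proof (T_iter_le r N (sstar 0) (sstar q) Hr (sstar_linf_pos 0 (Rle_refl 0))
                (fun j => sstar_le 0 q (Rle_refl 0) Hq j) i) as Hlow.
  pose proof (HN1 N (Nat.le_max_l _ _) i) as Hto1. pose proof (HN2 N (Nat.le_max_r _ _) i) as Hto0.
  pose proof (Hclose i) as Hnear.
  apply Rabs_def2 in Hto1, Hto0. apply Rabs_le_between in Hnear. apply Rabs_le. lra.
Qed.

Lemma sstar_uniform_continuity b : forall eps, 0 < eps -> exists w, 0 < w /\
  forall u v, 0 <= u <= b -> 0 <= v <= b -> Rabs (u - v) < w ->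
    forall i, Rabs (sstar u i - sstar v i) <= eps.
Proof.
  apply (equicontinuous_uniform_on_interval (fun i t => sstar t i)).
  intros x Hx e He. destruct (sstar_continuous x (proj1 Hx) e He) as [th [Hth Hth']].
  exists th. split; [exact Hth |]. intros y Hy Hyx i. apply Hth'; [apply Hy | exact Hyx].
Qed.

Definition robust_decay (t eta : R) : Prop := forall x,
  (forall j, sstar t j - eta <= x j <= sstar t j) -> vle (Gam_rho Ii gam mu (fun y => rho y / 2) x) x.

(* If [Gam (s t) i >= h0], the margin [rho (Gam (s t) i) / 2 >= rho h0 / 2] left
   by halving rho absorbs the perturbation; otherwise both terms of
   [Gam_rho (rho / 2) x i] are small compared with [s t i >= a]. *)
Lemma decay_near_sstar a : 0 < a -> exists eta, 0 < eta /\ forall t, a <= t -> robust_decay t eta.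
Proof.
  intros Ha. destruct (Kinf_small rho Hrho (a / 4)) as [d [Hd Hd']]; [lra |].
  assert (Hh0 : 0 < Rmin d (a / 4)) by (apply Rmin_pos; lra).
  pose proof (Rmin_l d (a / 4)). pose proof (Rmin_r d (a / 4)).
  set (h0 := Rmin d (a / 4)) in *.
  assert (Hrh0 : rho h0 <= a / 4) by (apply Hd'; lra).
  pose proof (Kinf_pos rho Hrho h0 Hh0).
  exists (Rmin (rho h0 / 2) (a / 2)). split; [apply Rmin_pos; lra |].
  intros t Ht x Hx i.
  pose proof (Rmin_l (rho h0 / 2) (a / 2)). pose proof (Rmin_r (rho h0 / 2) (a / 2)).
  assert (Hxnn : vnonneg x)
    by (intro j; specialize (Hx j); pose proof (sstar_ge t ltac:(lra) j); lra).
  pose proof (Gam_le Ii gam mu HG x (sstar t) Hxnn (fun j => proj2 (Hx j)) i).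
  pose proof (Gam_nonneg Ii gam mu HG x Hxnn i).
  pose proof (sstar_decay t ltac:(lra) i). pose proof (sstar_ge t ltac:(lra) i). specialize (Hx i).
  unfold Gam_rho in *; cbv beta in *.
  set (g := Gam Ii gam mu x i) in *. set (g' := Gam Ii gam mu (sstar t) i) in *.
  pose proof (Kinf_le rho Hrho g g' ltac:(lra) ltac:(lra)).
  destruct (Rle_dec h0 g') as [Hbig | Hsmall].
  - pose proof (Kinf_le rho Hrho h0 g' ltac:(lra) Hbig). lra.
  - pose proof (Kinf_le rho Hrho g h0 ltac:(lra) ltac:(lra)). lra.
Qed.

Lemma exists_decay_tolerances : exists eta : nat -> R, forall n, 0 < eta n /\
  forall t, / (INR n + 1) <= t -> robust_decay t (eta n).
Proof.
  apply (choice (fun n e => 0 < e /\ forall t, / (INR n + 1) <= t -> robust_decay t e)).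
  intro n. apply decay_near_sstar, Rinv_0_lt_compat, INR_succ_pos.
Qed.

Lemma decay_of_close_path (eta : nat -> R) (sigma : R -> I -> R) :
  (forall n t, / (INR n + 1) <= t -> robust_decay t (eta n)) ->
  (forall i, sigma 0 i = 0) ->
  (forall t, 0 < t -> exists n, / (INR n + 1) <= t /\
     forall i, sstar t i - eta n <= sigma t i <= sstar t i) ->
  forall r, 0 <= r -> vle (Gam_rho Ii gam mu (fun y => rho y / 2) (sigma r)) (sigma r).
Proof.
  intros Heta H0 Hclose r Hr. destruct (Req_dec r 0) as [-> | Hr0].
  - replace (sigma 0) with (vconst (I := I) 0)
      by (apply functional_extensionality; intro; symmetry; apply H0).
    intro i. rewrite (Gam_rho_vconst0 Ii gam mu HG _ (Kinf_half rho Hrho)). unfold vconst. lra.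
  - destruct (Hclose r ltac:(lra)) as [n [Hn Hsig]]. apply (Heta n r Hn), Hsig.
Qed.

End FixedPointPath.

(** * Piecewise linear functions with prescribed slopes *)

(* [ramp_up k] rises with slope 1 on [[k+1, k+2]], [ramp_down k] on
   [[1/(k+2), 1/(k+1)]]; both are constant elsewhere and vanish at 1.  These
   segments tile (0, oo). *)
Definition ramp_up (k : nat) (x : R) : R :=
  Rmin (Rmax x (INR k + 1)) (INR k + 2) - (INR k + 1).

Definition ramp_down (k : nat) (x : R) : R :=
  Rmin (Rmax x (/ (INR k + 2))) (/ (INR k + 1)) - / (INR k + 1).

Definition plin_sum (N : nat) (p q : nat -> R) (x : R) : R :=
  sum_f_R0 (fun k => p k * ramp_up k x + q k * ramp_down k x) N.

Definition covers (N : nat) (x : R) : Prop := 0 < x /\ x <= INR N + 1 /\ / x <= INR N + 1.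

Definition plin_index (x : R) : nat := Z.to_nat (up (x + / x)).

(* On (0, oo): the piecewise linear function with slope [p k] on [[k+1, k+2]],
   slope [q k] on [[1/(k+2), 1/(k+1)]] and value 0 at 1. *)
Definition plin (p q : nat -> R) (x : R) : R := plin_sum (plin_index x) p q x.

Definition touches_up (k : nat) (x y : R) : Prop := x < INR k + 2 /\ INR k + 1 < y.

Definition touches_down (k : nat) (x y : R) : Prop := x < / (INR k + 1) /\ / (INR k + 2) < y.

Lemma inv_succ_facts (k : nat) :
  0 < / (INR k + 2) /\ / (INR k + 2) < / (INR k + 1) /\ / (INR k + 1) <= 1.
Proof.
  pose proof (INR_succ_pos k). pose proof (pos_INR k).
  split; [apply Rinv_0_lt_compat; lra |]. split; [apply Rinv_lt_contravar; nra |].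
  rewrite <- Rinv_1. apply Rinv_le_contravar; lra.
Qed.

Lemma covers_le (N M : nat) (x : R) : covers N x -> (N <= M)%nat -> covers M x.
Proof. intros [H0 [H1 H2]] HNM. pose proof (le_INR _ _ HNM). repeat split; lra. Qed.

Lemma covers_plin_index (x : R) : 0 < x -> covers (plin_index x) x.
Proof.
  intros Hx. destruct (archimed (x + / x)) as [Hup _].
  pose proof (Rinv_0_lt_compat x Hx).
  assert (Hz : (0 <= up (x + / x))%Z) by (apply le_IZR; lra).
  unfold covers, plin_index. rewrite INR_IZR_INZ, Z2Nat.id by exact Hz. repeat split; lra.
Qed.

Lemma ramps_vanish (k : nat) (x : R) : covers k x -> ramp_up k x = 0 /\ ramp_down k x = 0.
Proof.
  intros [Hx [H1 H2]]. destruct (inv_succ_facts k) as [Ha [Hb _]].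
  assert (/ (INR k + 1) <= x).
  { rewrite <- (Rinv_inv x). apply Rinv_le_contravar; [apply Rinv_0_lt_compat |]; lra. }
  unfold ramp_up, ramp_down, Rmin, Rmax. split; repeat destruct Rle_dec; lra.
Qed.

Lemma plin_sum_stable (N M : nat) (p q : nat -> R) (x : R) :
  covers N x -> (N <= M)%nat -> plin_sum M p q x = plin_sum N p q x.
Proof.
  intros Hcov HNM. induction HNM as [| M HNM IH]; [reflexivity |].
  unfold plin_sum in *. rewrite tech5, IH.
  destruct (ramps_vanish (S M) x) as [-> ->]; [apply (covers_le N); auto |]. ring.
Qed.

Lemma plin_eq (N : nat) (p q : nat -> R) (x : R) : covers N x -> plin p q x = plin_sum N p q x.
Proof.
  intros Hcov. unfold plin. pose proof (covers_plin_index x (proj1 Hcov)) as Hidx.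
  rewrite <- (plin_sum_stable (plin_index x) (Nat.max N (plin_index x))) by (auto; lia).
  apply plin_sum_stable; [exact Hcov | lia].
Qed.

Lemma sum_ramp_up (N : nat) (x : R) :
  sum_f_R0 (fun k => ramp_up k x) N = Rmin (Rmax x 1) (INR N + 2) - 1.
Proof.
  induction N as [| N IH]; simpl sum_f_R0.
  - unfold ramp_up. simpl INR. replace (0 + 1) with 1 by ring. replace (0 + 2) with 2 by ring. ring.
  - rewrite IH. unfold ramp_up. rewrite S_INR. pose proof (pos_INR N).
    unfold Rmin, Rmax. repeat destruct Rle_dec; lra.
Qed.

Lemma sum_ramp_down (N : nat) (x : R) :
  sum_f_R0 (fun k => ramp_down k x) N = Rmin (Rmax x (/ (INR N + 2))) 1 - 1.
Proof.
  induction N as [| N IH]; simpl sum_f_R0.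
  - unfold ramp_down. simpl INR. replace (0 + 1) with 1 by ring. rewrite Rinv_1.
    replace (0 + 2) with 2 by ring. ring.
  - rewrite IH. unfold ramp_down.
    destruct (inv_succ_facts N) as [_ [HN HN1]]. destruct (inv_succ_facts (S N)) as [Ha [Hb _]].
    rewrite S_INR in *. replace (INR N + 1 + 1) with (INR N + 2) in * by ring.
    unfold Rmin, Rmax. repeat destruct Rle_dec; lra.
Qed.

Lemma sum_ramps_incr (N : nat) (x y : R) : covers N x -> covers N y ->
  sum_f_R0 (fun k => (ramp_up k y - ramp_up k x) + (ramp_down k y - ramp_down k x)) N = y - x.
Proof.
  intros [Hx [Hx1 Hx2]] [Hy [Hy1 Hy2]].
  rewrite plus_sum, !minus_sum, !sum_ramp_up, !sum_ramp_down.
  destruct (inv_succ_facts N) as [Ha [Hb Hc]].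
  assert (Hinv : forall z, 0 < z -> / z <= INR N + 1 -> / (INR N + 2) <= z).
  { intros z Hz Hzi. rewrite <- (Rinv_inv z).
    apply Rinv_le_contravar; [apply Rinv_0_lt_compat; lra |].
    lra. }
  pose proof (Hinv x Hx Hx2). pose proof (Hinv y Hy Hy2).
  unfold Rmin, Rmax. repeat destruct Rle_dec; lra.
Qed.

Lemma plin_incr_eq (N : nat) (p q : nat -> R) (x y : R) : covers N x -> covers N y ->
  plin p q y - plin p q x =
  sum_f_R0 (fun k => p k * (ramp_up k y - ramp_up k x) + q k * (ramp_down k y - ramp_down k x)) N.
Proof.
  intros Hx Hy. rewrite (plin_eq N p q x Hx), (plin_eq N p q y Hy). unfold plin_sum.
  rewrite <- minus_sum. apply sum_eq. intros. ring.
Qed.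

Lemma ramp_up_incr (k : nat) (x y : R) : x <= y ->
  0 <= ramp_up k y - ramp_up k x <= 1 /\ (ramp_up k y - ramp_up k x <> 0 -> touches_up k x y).
Proof.
  intros Hxy. unfold ramp_up, touches_up, Rmin, Rmax.
  repeat destruct Rle_dec; split; try lra; intros; lra.
Qed.

Lemma ramp_down_incr (k : nat) (x y : R) : x <= y ->
  0 <= ramp_down k y - ramp_down k x <= 1 /\
  (ramp_down k y - ramp_down k x <> 0 -> touches_down k x y).
Proof.
  intros Hxy. destruct (inv_succ_facts k) as [Ha [Hb Hc]].
  unfold ramp_down, touches_down, Rmin, Rmax. repeat destruct Rle_dec; split; try lra; intros; lra.
Qed.

Section PlinIncrements.
Variables (p q : nat -> R) (x y : R).
Hypotheses (Hx : 0 < x) (Hxy : x <= y).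

Let N := Nat.max (plin_index x) (plin_index y).

Let HNx : covers N x.
Proof. apply (covers_le (plin_index x)); [apply covers_plin_index, Hx | lia]. Qed.

Let HNy : covers N y.
Proof. apply (covers_le (plin_index y)); [apply covers_plin_index; lra | lia]. Qed.

Lemma plin_incr_ge (m : R) :
  (forall k, touches_up k x y -> m <= p k) -> (forall k, touches_down k x y -> m <= q k) ->
  m * (y - x) <= plin p q y - plin p q x.
Proof.
  intros Hp Hq.
  rewrite (plin_incr_eq N p q x y HNx HNy), <- (sum_ramps_incr N x y HNx HNy), scal_sum.
  apply sum_Rle. intros k _.
  destruct (ramp_up_incr k x y Hxy) as [Hu Hu']. destruct (ramp_down_incr k x y Hxy) as [Hd Hd'].
  pose proof (mult_le_on_support m (p k) _ (proj1 Hu) (fun H => Hp k (Hu' H))).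
  pose proof (mult_le_on_support m (q k) _ (proj1 Hd) (fun H => Hq k (Hd' H))). lra.
Qed.

Lemma plin_incr_le (M : R) :
  (forall k, touches_up k x y -> p k <= M) -> (forall k, touches_down k x y -> q k <= M) ->
  plin p q y - plin p q x <= M * (y - x).
Proof.
  intros Hp Hq.
  rewrite (plin_incr_eq N p q x y HNx HNy), <- (sum_ramps_incr N x y HNx HNy), scal_sum.
  apply sum_Rle. intros k _.
  destruct (ramp_up_incr k x y Hxy) as [Hu Hu']. destruct (ramp_down_incr k x y Hxy) as [Hd Hd'].
  pose proof (mult_le_on_support (p k) M _ (proj1 Hu) (fun H => Hp k (Hu' H))).
  pose proof (mult_le_on_support (q k) M _ (proj1 Hd) (fun H => Hq k (Hd' H))). lra.
Qed.

(* Each segment contributes at most its slope, the slopes being summable. *)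
Lemma plin_incr_le_geometric (B : R) : 0 <= B -> (forall k, 0 <= p k /\ 0 <= q k) ->
  (forall k, touches_up k x y -> p k <= B / 2 ^ (k + 3)) ->
  (forall k, touches_down k x y -> q k <= B / 2 ^ (k + 3)) ->
  plin p q y - plin p q x <= B / 2.
Proof.
  intros HB Hpq Hp Hq. rewrite (plin_incr_eq N p q x y HNx HNy).
  apply Rle_trans with (sum_f_R0 (fun k => / 2 ^ (k + 3) * (2 * B)) N).
  - apply sum_Rle. intros k _.
    destruct (ramp_up_incr k x y Hxy) as [Hu Hu']. destruct (ramp_down_incr k x y Hxy) as [Hd Hd'].
    destruct (Hpq k) as [Hp0 Hq0].
    assert (Hw : 0 <= B / 2 ^ (k + 3)) by (apply Rdiv_le_0_compat; [exact HB | apply pow_lt; lra]).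
    pose proof (mult_le_on_support (p k) (B / 2 ^ (k + 3)) _ (proj1 Hu) (fun H => Hp k (Hu' H))).
    pose proof (mult_le_on_support (q k) (B / 2 ^ (k + 3)) _ (proj1 Hd) (fun H => Hq k (Hd' H))).
    unfold Rdiv in *. nra.
  - rewrite <- scal_sum. pose proof (sum_geometric_le N). nra.
Qed.

End PlinIncrements.

Lemma plin_le (p q : nat -> R) (x y : R) : 0 < x -> x <= y -> (forall k, 0 <= p k /\ 0 <= q k) ->
  plin p q x <= plin p q y.
Proof.
  intros Hx Hxy Hpq. pose proof (plin_incr_ge p q x y Hx Hxy 0 (fun k _ => proj1 (Hpq k))
                                   (fun k _ => proj2 (Hpq k))). lra.
Qed.

(** * Bi-Lipschitz approximation of a monotone family *)

Definition at_scale (n : nat) (t : R) : Prop :=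
  / (INR n + 1) <= t /\ t <= INR n + 1 /\ INR n <= Rmax t (/ t).

Lemma at_scale_exists (t : R) : 0 < t -> exists n, at_scale n t.
Proof.
  intros Ht. assert (H0 : 0 <= Rmax t (/ t)) by (eapply Rle_trans; [| apply Rmax_l]; lra).
  destruct (nfloor_ex _ H0) as [n [Hn1 Hn2]]. exists n.
  pose proof (Rmax_l t (/ t)). pose proof (Rmax_r t (/ t)). pose proof (INR_succ_pos n).
  split; [| split; lra].
  rewrite <- (Rinv_inv t). apply Rinv_le_contravar; [apply Rinv_0_lt_compat, Ht | lra].
Qed.

Lemma at_scale_half (n : nat) (t u : R) : 0 < t -> at_scale n t -> t / 2 <= u <= t ->
  INR n <= 2 * Rmax u (/ u).
Proof.
  intros Ht [_ [_ Hn]] Hu.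
  assert (/ t <= / u) by (apply Rinv_le_contravar; lra).
  assert (/ u <= 2 * / u) by (pose proof (Rinv_0_lt_compat u ltac:(lra)); lra).
  unfold Rmax in *. repeat destruct Rle_dec; lra.
Qed.

Lemma touches_up_index (a b x y : R) (Km k : nat) : a <= x -> y <= b -> Rmax b (/ a) <= INR Km ->
  touches_up k x y -> (k <= Km)%nat.
Proof.
  intros _ Hy HKm [_ Hk]. apply INR_le. pose proof (Rmax_l b (/ a)). lra.
Qed.

Lemma touches_down_index (a b x y : R) (Km k : nat) : 0 < a -> a <= x -> Rmax b (/ a) <= INR Km ->
  touches_down k x y -> (k <= Km)%nat.
Proof.
  intros Ha Hx HKm [Hk _]. apply INR_le. pose proof (Rmax_r b (/ a)).
  assert (/ x <= / a) by (apply Rinv_le_contravar; lra).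
  assert (INR k + 1 < / x).
  { rewrite <- (Rinv_inv (INR k + 1)). apply Rinv_lt_contravar; [| exact Hk].
    apply Rmult_lt_0_compat; [lra | apply Rinv_0_lt_compat, INR_succ_pos]. }
  lra.
Qed.

Section BiLipschitzApproximation.
Context {I : Type} (Hne : inhabited I) (h : R -> I -> R) (phi : R -> R) (Hphi : Kinf phi)
  (h_ge : forall t, 0 <= t -> forall i, t <= h t i)
  (h_le_phi : forall t, 0 <= t -> forall i, h t i <= phi t)
  (h_le : forall t t', 0 <= t -> t <= t' -> forall i, h t i <= h t' i)
  (h_uniform_continuity : forall b eps, 0 < eps -> exists w, 0 < w /\ forall u v,
     0 <= u <= b -> 0 <= v <= b -> Rabs (u - v) < w -> forall i, Rabs (h u i - h v i) <= eps)
  (tol0 : nat -> R) (Htol0 : forall n, 0 < tol0 n).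

Lemma phi_ge t : 0 <= t -> t <= phi t.
Proof.
  intros Ht. destruct Hne as [i].
  apply (Rle_trans _ (h t i)); [apply h_ge | apply h_le_phi]; exact Ht.
Qed.

(* The cap [1/(2(k+1))] keeps the approximation above [t / 2]. *)
Definition tol (n : nat) : R := prefix_min (fun k => Rmin (tol0 k) (/ (INR k + 1) / 2)) n.

Lemma tol_pos n : 0 < tol n.
Proof.
  apply prefix_min_pos. intro k. apply Rmin_pos; [apply Htol0 |].
  pose proof (Rinv_0_lt_compat _ (INR_succ_pos k)). lra.
Qed.

Lemma tol_le_tol0 n : tol n <= tol0 n.
Proof. eapply Rle_trans; [apply (prefix_min_le _ n n), Nat.le_refl | apply Rmin_l]. Qed.

Lemma tol_le_half_inv n : tol n <= / (INR n + 1) / 2.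
Proof. eapply Rle_trans; [apply (prefix_min_le _ n n), Nat.le_refl | apply Rmin_r]. Qed.

Lemma tol_antitone m n : (m <= n)%nat -> tol n <= tol m.
Proof. apply prefix_min_antitone. Qed.

Lemma exists_modulus : exists w : nat -> R, forall n, 0 < w n /\ forall u v,
  0 <= u <= INR n + 1 -> 0 <= v <= INR n + 1 -> Rabs (u - v) < w n ->
  forall i, Rabs (h u i - h v i) <= tol n / 2.
Proof.
  apply (choice (fun n wn => 0 < wn /\ forall u v, 0 <= u <= INR n + 1 -> 0 <= v <= INR n + 1 ->
    Rabs (u - v) < wn -> forall i, Rabs (h u i - h v i) <= tol n / 2)).
  intro n. apply h_uniform_continuity. pose proof (tol_pos n). lra.
Qed.

Lemma exists_phi_inverse_bound : exists Mphi : nat -> nat, forall k u, 0 < u ->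
  / (INR k + 2) < 2 * phi u -> 2 / u <= INR (Mphi k).
Proof.
  apply (choice (fun k M => forall u, 0 < u -> / (INR k + 2) < 2 * phi u -> 2 / u <= INR M)).
  intro k. destruct (inv_succ_facts k) as [Hk _].
  destruct (Kinf_small phi Hphi (/ (INR k + 2) / 2)) as [d [Hd Hd']]; [lra |].
  destruct (exists_nat_ge (2 / d)) as [M HM]. exists M. intros u Hu Hphu.
  destruct (Rle_dec u d) as [Hud | Hud]; [specialize (Hd' u ltac:(lra) Hud); lra |].
  eapply Rle_trans; [| exact HM]. unfold Rdiv. apply Rmult_le_compat_l; [lra |].
  apply Rinv_le_contravar; lra.
Qed.

Section Construction.
Variables (w : nat -> R) (Mphi : nat -> nat).
Hypothesis Hw : forall n, 0 < w n /\ forall u v,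
  0 <= u <= INR n + 1 -> 0 <= v <= INR n + 1 -> Rabs (u - v) < w n ->
  forall i, Rabs (h u i - h v i) <= tol n / 2.
Hypothesis HMphi : forall k u, 0 < u -> / (INR k + 2) < 2 * phi u -> 2 / u <= INR (Mphi k).

(* Slopes of [gentle]: at most 1/2 and small enough that [gentle] varies by less than
   [tol m / 2] on [[u, 2 phi(u)]] at every scale [m] of [u]. *)
Definition gentle_up (k : nat) : R := Rmin (/ 2) (tol (2 * k + 4 + Mphi O) / 2 ^ (k + 3)).
Definition gentle_down (k : nat) : R := Rmin (/ 2) (tol (2 + Mphi k) / 2 ^ (k + 3)).
Definition gentle : R -> R := plin gentle_up gentle_down.

(* On [[t/2, t]] with [t] at scale [n] the slopes of [steep] are at least
   [steepness n], so [steep t - steep u >= phi(n+1)] as soon as [t - u >= w n]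
   or [t - u >= t / 4]. *)
Definition steepness (n : nat) : R := phi (INR n + 1) * (/ w n + 4 * (INR n + 1)) + 1.
Definition steep_slope (k : nat) : R := prefix_max steepness (2 * k + 4).
Definition steep : R -> R := plin steep_slope steep_slope.

Lemma gentle_slopes k : 0 < gentle_up k <= / 2 /\ 0 < gentle_down k <= / 2.
Proof.
  assert (Hp : forall m, 0 < tol m / 2 ^ (k + 3))
    by (intro m; apply Rdiv_lt_0_compat; [apply tol_pos | apply pow_lt; lra]).
  unfold gentle_up, gentle_down. repeat split; try apply Rmin_l; apply Rmin_pos; auto; lra.
Qed.

Lemma gentle_slopes_nonneg k : 0 <= gentle_up k /\ 0 <= gentle_down k.
Proof. pose proof (gentle_slopes k). lra. Qed.

Lemma gentle_le x y : 0 < x -> x <= y -> gentle x <= gentle y.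
Proof. intros Hx Hxy. apply plin_le; auto. apply gentle_slopes_nonneg. Qed.

Lemma gentle_incr_le x y : 0 < x -> x <= y -> gentle y - gentle x <= / 2 * (y - x).
Proof. intros Hx Hxy. apply plin_incr_le; auto; intros k _; apply gentle_slopes. Qed.

Lemma gentle_incr_ge a b : 0 < a -> exists l, 0 < l /\
  forall x y, a <= x -> x <= y -> y <= b -> l * (y - x) <= gentle y - gentle x.
Proof.
  intros Ha. destruct (exists_nat_ge (Rmax b (/ a))) as [Km HKm].
  exists (prefix_min (fun k => Rmin (gentle_up k) (gentle_down k)) Km).
  split; [apply prefix_min_pos; intro k; apply Rmin_pos; apply gentle_slopes |].
  intros x y Hx Hxy Hy. apply plin_incr_ge; [lra | exact Hxy | |]; intros k Hk.
  - eapply Rle_trans; [apply prefix_min_le, (touches_up_index a b x y Km k); auto | apply Rmin_l].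
  - eapply Rle_trans;
      [apply prefix_min_le, (touches_down_index a b x y Km k); auto; lra | apply Rmin_r].
Qed.

Lemma gentle_oscillation u m : 0 < u -> INR m <= 2 * Rmax u (/ u) ->
  gentle (2 * phi u) - gentle u <= tol m / 2.
Proof.
  intros Hu Hm. pose proof (phi_ge u ltac:(lra)). pose proof (Rinv_0_lt_compat u Hu).
  assert (Hmax : Rmax u (/ u) <= u + / u) by (unfold Rmax; destruct Rle_dec; lra).
  apply plin_incr_le_geometric;
    [lra | lra | apply Rlt_le, tol_pos | apply gentle_slopes_nonneg | |];
    intros k [Hk1 Hk2]; pose proof (pos_INR k).
  - eapply Rle_trans; [apply Rmin_r |].
    apply Rmult_le_compat_r; [apply Rlt_le, Rinv_0_lt_compat, pow_lt; lra |].
    apply tol_antitone, INR_le. rewrite !plus_INR, mult_INR.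
    pose proof (HMphi 0 u Hu ltac:(simpl INR; lra)). simpl INR in *. unfold Rdiv in *. lra.
  - eapply Rle_trans; [apply Rmin_r |].
    apply Rmult_le_compat_r; [apply Rlt_le, Rinv_0_lt_compat, pow_lt; lra |].
    apply tol_antitone, INR_le. rewrite plus_INR.
    pose proof (HMphi k u Hu Hk2). destruct (inv_succ_facts k) as [_ [_ Hk]]. simpl INR.
    unfold Rdiv in *. lra.
Qed.

Lemma steepness_ge_1 n : 1 <= steepness n.
Proof.
  unfold steepness. pose proof (Kinf_nonneg phi Hphi (INR n + 1) (Rlt_le _ _ (INR_succ_pos n))).
  pose proof (Rinv_0_lt_compat _ (proj1 (Hw n))). pose proof (INR_succ_pos n).
  assert (0 <= phi (INR n + 1) * (/ w n + 4 * (INR n + 1))) by (apply Rmult_le_pos; lra). lra.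
Qed.

Lemma steepness_modulus n : phi (INR n + 1) <= steepness n * w n.
Proof.
  unfold steepness. destruct (Hw n) as [Hwn _].
  pose proof (Kinf_nonneg phi Hphi (INR n + 1) (Rlt_le _ _ (INR_succ_pos n))).
  pose proof (INR_succ_pos n).
  replace ((phi (INR n + 1) * (/ w n + 4 * (INR n + 1)) + 1) * w n)
    with (phi (INR n + 1) + phi (INR n + 1) * (4 * (INR n + 1) * w n) + w n) by (field; lra).
  assert (0 <= phi (INR n + 1) * (4 * (INR n + 1) * w n)) by (apply Rmult_le_pos; nra). lra.
Qed.

Lemma steepness_quarter n t : / (INR n + 1) <= t -> phi (INR n + 1) <= steepness n * (t / 4).
Proof.
  intros Ht. unfold steepness. destruct (Hw n) as [Hwn _].
  pose proof (Kinf_nonneg phi Hphi (INR n + 1) (Rlt_le _ _ (INR_succ_pos n))).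
  pose proof (INR_succ_pos n). pose proof (Rinv_0_lt_compat _ Hwn).
  assert (1 <= (INR n + 1) * t).
  { apply (Rmult_le_compat_l (INR n + 1)) in Ht; [| lra]. rewrite Rinv_r in Ht; lra. }
  assert (0 < t) by (pose proof (Rinv_0_lt_compat _ (INR_succ_pos n)); lra).
  assert (0 <= phi (INR n + 1) * (/ w n * (t / 4)))
    by (apply Rmult_le_pos; [lra |]; apply Rmult_le_pos; lra).
  nra.
Qed.

Lemma steep_slope_ge_1 k : 1 <= steep_slope k.
Proof. eapply Rle_trans; [apply (steepness_ge_1 0) | apply prefix_max_ge; lia]. Qed.

Lemma steep_incr_ge x y : 0 < x -> x <= y -> y - x <= steep y - steep x.
Proof.
  intros Hx Hxy. unfold steep.
  pose proof (plin_incr_ge steep_slope steep_slope x y Hx Hxy 1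
                (fun k _ => steep_slope_ge_1 k) (fun k _ => steep_slope_ge_1 k)). lra.
Qed.

Lemma steep_incr_at_scale n t u : 0 < t -> at_scale n t -> t / 2 <= u <= t ->
  steepness n * (t - u) <= steep t - steep u.
Proof.
  intros Ht [Hn1 [Hn2 Hn3]] Hu. apply plin_incr_ge; [lra | lra | |];
    intros k [Hk1 Hk2]; apply prefix_max_ge, INR_le; rewrite plus_INR, mult_INR; simpl INR;
    pose proof (pos_INR k).
  - assert (/ t < 1) by (rewrite <- Rinv_1; apply Rinv_lt_contravar; lra).
    unfold Rmax in Hn3. destruct Rle_dec; lra.
  - destruct (inv_succ_facts k) as [_ [_ Hk]].
    assert (/ t < INR k + 2).
    { rewrite <- (Rinv_inv (INR k + 2)). apply Rinv_lt_contravar; [| exact Hk2].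
      apply Rmult_lt_0_compat; [apply Rinv_0_lt_compat |]; lra. }
    unfold Rmax in Hn3. destruct Rle_dec; lra.
Qed.

Lemma steep_lipschitz a b : 0 < a -> exists L, forall x y, a <= x -> x <= y -> y <= b ->
  steep y - steep x <= L * (y - x).
Proof.
  intros Ha. destruct (exists_nat_ge (Rmax b (/ a))) as [Km HKm].
  exists (steep_slope Km). intros x y Hx Hxy Hy. apply plin_incr_le; [lra | exact Hxy | |];
    intros k Hk; apply prefix_max_mono.
  - pose proof (touches_up_index a b x y Km k Hx Hy HKm Hk). lia.
  - pose proof (touches_down_index a b x y Km k Ha Hx HKm Hk). lia.
Qed.

Definition hlow_candidates (i : I) (u : R) : R -> Prop :=
  fun y => exists v, u <= v /\ y = h v i - gentle v.

(* The largest function below [h i] whose increments dominate those of [gentle]. *)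
Definition hlow (i : I) (u : R) : R := real (Glb_Rbar (hlow_candidates i u)) + gentle u.

Lemma hlow_candidates_lb u i : 0 < u -> forall y, hlow_candidates i u y ->
  h u i - gentle (2 * phi u) <= y.
Proof.
  intros Hu y [v [Huv ->]]. pose proof (phi_ge u ltac:(lra)).
  destruct (Rle_dec v (2 * phi u)) as [Hv | Hv].
  - pose proof (h_le u v ltac:(lra) Huv i). pose proof (gentle_le v (2 * phi u) ltac:(lra) Hv). lra.
  - pose proof (h_ge v ltac:(lra) i). pose proof (h_le_phi u ltac:(lra) i).
    pose proof (gentle_incr_le (2 * phi u) v ltac:(lra) ltac:(lra)). lra.
Qed.

Lemma hlow_bounds u i : 0 < u -> h u i - (gentle (2 * phi u) - gentle u) <= hlow i u <= h u i.
Proof.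
  intros Hu. unfold hlow. split.
  - pose proof (real_Glb_Rbar_ge _ _ (ex_intro _ _ (ex_intro _ u (conj (Rle_refl u) eq_refl)))
                  (hlow_candidates_lb u i Hu)). lra.
  - pose proof (real_Glb_Rbar_le _ _ (h u i - gentle u) (hlow_candidates_lb u i Hu)
                  (ex_intro _ u (conj (Rle_refl u) eq_refl))). lra.
Qed.

Lemma hlow_incr_ge u u' i : 0 < u -> u <= u' -> gentle u' - gentle u <= hlow i u' - hlow i u.
Proof.
  intros Hu Huu. unfold hlow.
  enough (real (Glb_Rbar (hlow_candidates i u)) <= real (Glb_Rbar (hlow_candidates i u'))) by lra.
  apply real_Glb_Rbar_ge; [exists (h u' i - gentle u'), u'; split; [lra | reflexivity] |].
  intros y [v [Hv ->]]. apply (real_Glb_Rbar_le _ (h u i - gentle (2 * phi u)));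
    [apply hlow_candidates_lb, Hu | exists v; split; [lra | reflexivity]].
Qed.

Lemma hlow_at_scale n t u i : 0 < t -> at_scale n t -> t / 2 <= u <= t ->
  h u i - tol n / 2 <= hlow i u.
Proof.
  intros Ht Hn Hu. pose proof (hlow_bounds u i ltac:(lra)).
  pose proof (gentle_oscillation u n ltac:(lra) (at_scale_half n t u Ht Hn Hu)). lra.
Qed.

Lemma hlow_at_scale_pos n t u i : 0 < t -> at_scale n t -> t / 2 <= u <= t ->
  tol n / 2 <= hlow i u.
Proof.
  intros Ht Hn Hu. pose proof (hlow_at_scale n t u i Ht Hn Hu).
  pose proof (h_ge u ltac:(lra) i). pose proof (tol_le_half_inv n). destruct Hn. lra.
Qed.

(* The infimal convolution of [hlow i] with [steep] over [[t/2, t]]: it keeps the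
   increment lower bound of [hlow i] and gains the local Lipschitz bound of [steep]. *)
Definition happrox_candidates (i : I) (t : R) : R -> Prop :=
  fun y => exists u, t / 2 <= u <= t /\ y = hlow i u + steep t - steep u.

Definition happrox (t : R) (i : I) : R :=
  if Rlt_dec 0 t then real (Glb_Rbar (happrox_candidates i t)) else 0.

(* Far from [t] the increment of [steep] exceeds [phi(n+1) >= h t i]; near [t]
   both [h] and [hlow] are within [tol n / 2] of [h t]. *)
Lemma happrox_candidates_lb n t i : 0 < t -> at_scale n t ->
  forall y, happrox_candidates i t y -> h t i - tol n <= y.
Proof.
  intros Ht Hn y [u [Hu ->]]. pose proof Hn as [Hn1 [Hn2 _]].
  pose proof (hlow_at_scale n t u i Ht Hn Hu). pose proof (hlow_at_scale_pos n t u i Ht Hn Hu).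
  pose proof (steep_incr_at_scale n t u Ht Hn Hu). pose proof (steepness_ge_1 n).
  destruct (Rlt_dec (Rabs (t - u)) (w n)) as [Hclose | Hfar].
  - destruct (Hw n) as [_ Hw']. pose proof (Hw' t u ltac:(lra) ltac:(lra) Hclose i) as Hh.
    apply Rabs_le_between in Hh.
    assert (0 <= steepness n * (t - u)) by (apply Rmult_le_pos; lra). lra.
  - rewrite Rabs_pos_eq in Hfar by lra.
    pose proof (steepness_modulus n).
    assert (steepness n * w n <= steepness n * (t - u)) by (apply Rmult_le_compat_l; lra).
    pose proof (Kinf_le phi Hphi t (INR n + 1) ltac:(lra) Hn2).
    pose proof (h_le_phi t ltac:(lra) i).
    pose proof (tol_pos n). lra.
Qed.

Lemma happrox_ge_of_candidates t i m : 0 < t -> (forall y, happrox_candidates i t y -> m <= y) ->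
  m <= happrox t i.
Proof.
  intros Ht Hm. unfold happrox. destruct (Rlt_dec 0 t) as [_ | Ht']; [| lra].
  apply real_Glb_Rbar_ge; [| exact Hm].
  exists (hlow i t + steep t - steep t), t. split; [lra | reflexivity].
Qed.

Lemma happrox_le_candidate t i u : 0 < t -> t / 2 <= u <= t ->
  happrox t i <= hlow i u + steep t - steep u.
Proof.
  intros Ht Hu. unfold happrox. destruct (Rlt_dec 0 t) as [_ | Ht']; [| lra].
  destruct (at_scale_exists t Ht) as [n Hn].
  apply (real_Glb_Rbar_le _ (h t i - tol n)); [apply happrox_candidates_lb; auto | exists u; auto].
Qed.

Lemma happrox_at_scale n t i : 0 < t -> at_scale n t -> h t i - tol n <= happrox t i <= h t i.
Proof.
  intros Ht Hn. split.
  - apply happrox_ge_of_candidates, happrox_candidates_lb; assumption.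
  - pose proof (happrox_le_candidate t i t Ht ltac:(lra)). pose proof (hlow_bounds t i Ht). lra.
Qed.

Lemma happrox_incr_ge a b : 0 < a -> exists l, 0 < l /\ forall t t', a <= t -> t <= t' -> t' <= b ->
  forall i, l * (t' - t) <= happrox t' i - happrox t i.
Proof.
  intros Ha. destruct (gentle_incr_ge a b Ha) as [lC [HlC HlC']].
  exists (Rmin lC 1). split; [apply Rmin_pos; lra |]. intros t t' Ht Htt Htb i.
  pose proof (Rmin_l lC 1). pose proof (Rmin_r lC 1).
  enough (happrox t i + Rmin lC 1 * (t' - t) <= happrox t' i) by lra.
  apply happrox_ge_of_candidates; [lra |]. intros y [u' [Hu' ->]].
  destruct (Rle_dec u' t) as [Hut | Hut].
  - pose proof (happrox_le_candidate t i u' ltac:(lra) ltac:(lra)).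
    pose proof (steep_incr_ge t t' ltac:(lra) Htt).
    assert (Rmin lC 1 * (t' - t) <= 1 * (t' - t)) by (apply Rmult_le_compat_r; lra). lra.
  - pose proof (happrox_le_candidate t i t ltac:(lra) ltac:(lra)).
    pose proof (hlow_incr_ge t u' i ltac:(lra) ltac:(lra)).
    pose proof (HlC' t u' Ht ltac:(lra) ltac:(lra)).
    pose proof (steep_incr_ge u' t' ltac:(lra) ltac:(lra)).
    assert (Rmin lC 1 * (u' - t) <= lC * (u' - t)) by (apply Rmult_le_compat_r; lra).
    assert (Rmin lC 1 * (t' - u') <= 1 * (t' - u')) by (apply Rmult_le_compat_r; lra). lra.
Qed.

(* A candidate for [t] with [u < t'/2] exceeds [phi(n+1) >= h t i], so it is
   never below the candidate [u = t] for [t']. *)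
Lemma happrox_incr_le_local t t' i : 0 < t -> t <= t' -> t' <= 3 * t / 2 ->
  happrox t' i - happrox t i <= steep t' - steep t.
Proof.
  intros Ht Htt Ht3.
  enough (happrox t' i - (steep t' - steep t) <= happrox t i) by lra.
  apply happrox_ge_of_candidates; [exact Ht |]. intros y [u [Hu ->]].
  destruct (Rle_dec (t' / 2) u) as [Hu' | Hu'].
  - pose proof (happrox_le_candidate t' i u ltac:(lra) ltac:(lra)). lra.
  - destruct (at_scale_exists t Ht) as [n Hn]. pose proof Hn as [Hn1 [Hn2 _]].
    pose proof (steep_incr_at_scale n t u Ht Hn Hu). pose proof (steepness_quarter n t Hn1).
    assert (steepness n * (t / 4) <= steepness n * (t - u))
      by (apply Rmult_le_compat_l; [pose proof (steepness_ge_1 n) |]; lra).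
    pose proof (Kinf_le phi Hphi t (INR n + 1) ltac:(lra) Hn2).
    pose proof (h_le_phi t ltac:(lra) i).
    pose proof (hlow_at_scale_pos n t u i Ht Hn Hu). pose proof (tol_pos n).
    pose proof (happrox_le_candidate t' i t ltac:(lra) ltac:(lra)). pose proof (hlow_bounds t i Ht).
    lra.
Qed.

Lemma happrox_incr_le a b : 0 < a -> exists L, forall t t', a <= t -> t <= t' -> t' <= b ->
  forall i, happrox t' i - happrox t i <= L * (t' - t).
Proof.
  intros Ha. destruct (steep_lipschitz a b Ha) as [L HL]. exists L. intros t t' Ht Htt Htb i.
  apply (lipschitz_of_local_lipschitz (fun x => happrox x i) a b L Ha); auto.
  intros x y Hx Hxy Hy Hy3. eapply Rle_trans; [apply happrox_incr_le_local; lra | apply HL; lra].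
Qed.

Lemma happrox_0 i : happrox 0 i = 0.
Proof. unfold happrox. destruct Rlt_dec; [lra | reflexivity]. Qed.

Lemma happrox_bounds t i : 0 <= t -> t / 2 <= happrox t i <= phi t.
Proof.
  intros Ht. destruct (Req_dec t 0) as [-> | Ht0].
  - rewrite happrox_0, (Kinf_0 phi Hphi). lra.
  - destruct (at_scale_exists t ltac:(lra)) as [n Hn].
    pose proof (happrox_at_scale n t i ltac:(lra) Hn). pose proof (h_ge t Ht i).
    pose proof (h_le_phi t Ht i). pose proof (tol_le_half_inv n). destruct Hn. lra.
Qed.

End Construction.

Theorem bilipschitz_approximation : exists sigma : R -> I -> R,
  (forall i, sigma 0 i = 0) /\
  (forall t, 0 <= t -> forall i, t / 2 <= sigma t i <= phi t) /\
  (forall t, 0 < t -> exists n, / (INR n + 1) <= t /\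
     forall i, h t i - tol0 n <= sigma t i <= h t i) /\
  (forall a b, 0 < a -> exists l L, 0 < l /\ forall t t', a <= t -> t <= t' -> t' <= b ->
     forall i, l * (t' - t) <= sigma t' i - sigma t i <= L * (t' - t)).
Proof.
  destruct exists_modulus as [w Hw]. destruct exists_phi_inverse_bound as [Mphi HMphi].
  exists (happrox w Mphi). split; [| split; [| split]].
  - apply happrox_0.
  - intros t Ht i. apply (happrox_bounds w Mphi Hw HMphi t i Ht).
  - intros t Ht. destruct (at_scale_exists t Ht) as [n Hn]. exists n. split; [apply Hn |].
    intro i. pose proof (happrox_at_scale w Mphi Hw HMphi n t i Ht Hn). pose proof (tol_le_tol0 n).
    lra.
  - intros a b Ha. destruct (happrox_incr_ge w Mphi Hw HMphi a b Ha) as [l [Hl Hl']].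
    destruct (happrox_incr_le w Mphi Hw HMphi a b Ha) as [L HL].
    exists l, L. split; [exact Hl |]. intros. split; auto.
Qed.

End BiLipschitzApproximation.

(** * Paths of strict decay *)

Section BiLipschitzPaths.
Context {I : Type} (sigma : R -> I -> R) (phi : R -> R) (Hphi : Kinf phi)
  (sigma_0 : forall i, sigma 0 i = 0)
  (sigma_bounds : forall t, 0 <= t -> forall i, t / 2 <= sigma t i <= phi t)
  (sigma_bilipschitz : forall a b, 0 < a -> exists l L, 0 < l /\
     forall t t', a <= t -> t <= t' -> t' <= b ->
     forall i, l * (t' - t) <= sigma t' i - sigma t i <= L * (t' - t)).

Lemma sigma_bilipschitz_abs a b : 0 < a -> exists l L, 0 < l /\ 0 <= L /\
  forall i t t', a <= t <= b -> a <= t' <= b ->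
    l * Rabs (t' - t) <= Rabs (sigma t' i - sigma t i) <= L * Rabs (t' - t).
Proof.
  intros Ha. destruct (sigma_bilipschitz a b Ha) as [l [L [Hl HlL]]].
  exists l, (Rmax L 0). split; [exact Hl | split; [apply Rmax_r |]].
  intros i t t' Ht Ht'. pose proof (Rmax_l L 0). pose proof (Rmax_r L 0).
  destruct (Rle_dec t t') as [Htt | Htt].
  - destruct (HlL t t' (proj1 Ht) Htt (proj2 Ht') i).
    rewrite !Rabs_pos_eq by nra. split; [lra | nra].
  - destruct (HlL t' t (proj1 Ht') ltac:(lra) (proj2 Ht) i).
    rewrite !Rabs_left1 by nra. split; [lra | nra].
Qed.

Lemma sigma_continuous i x : 0 <= x -> forall eps, 0 < eps -> exists d, 0 < d /\
  forall y, 0 <= y -> Rabs (y - x) < d -> Rabs (sigma y i - sigma x i) < eps.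
Proof.
  intros Hx eps Heps. destruct (Req_dec x 0) as [-> | Hx0].
  - destruct (Kinf_small phi Hphi (eps / 2)) as [d [Hd Hd']]; [lra |].
    exists d. split; [exact Hd |]. intros y Hy Hyd. rewrite sigma_0, !Rminus_0_r in *.
    rewrite Rabs_pos_eq in Hyd by exact Hy.
    pose proof (sigma_bounds y Hy i). pose proof (Hd' y Hy ltac:(lra)).
    rewrite Rabs_pos_eq; lra.
  - destruct (sigma_bilipschitz_abs (x / 2) (2 * x)) as [l [L [_ [HL HlL]]]]; [lra |].
    exists (Rmin (x / 2) (eps / (L + 1))).
    split; [apply Rmin_pos; [lra | apply Rdiv_lt_0_compat; lra] |].
    intros y Hy Hyx. pose proof (Rmin_l (x / 2) (eps / (L + 1))).
    pose proof (Rmin_r (x / 2) (eps / (L + 1))).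
    apply Rabs_def2 in Hyx as Hyx'. destruct Hyx' as [Hyx1 Hyx2].
    destruct (HlL i x y ltac:(lra) ltac:(lra)) as [_ Hlip].
    apply (Rle_lt_trans _ _ _ Hlip).
    assert (Hyx3 : Rabs (y - x) < eps / (L + 1)) by lra.
    apply (Rmult_lt_compat_r (L + 1)) in Hyx3; [| lra].
    unfold Rdiv in Hyx3. rewrite Rmult_assoc, Rinv_l, Rmult_1_r in Hyx3 by lra.
    pose proof (Rabs_pos (y - x)). nra.
Qed.

Lemma sigma_Kinf i : Kinf (fun t => sigma t i).
Proof.
  split; [apply sigma_0 | split; [apply sigma_continuous | split]].
  - intros x y Hx Hxy. destruct (Req_dec x 0) as [-> | Hx0].
    + rewrite sigma_0. pose proof (sigma_bounds y ltac:(lra) i). lra.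
    + destruct (sigma_bilipschitz x y ltac:(lra)) as [l [L [Hl HlL]]].
      destruct (HlL x y ltac:(lra) ltac:(lra) ltac:(lra) i). nra.
  - intros M. exists (2 * Rabs M + 2). pose proof (Rabs_pos M). pose proof (Rle_abs M).
    pose proof (sigma_bounds (2 * Rabs M + 2) ltac:(lra) i). split; lra.
Qed.

Lemma sigma_inverse_bilipschitz (K : R -> Prop) : compact K -> (forall x, K x -> 0 < x) ->
  exists l L, 0 < l /\ l <= L /\
    forall i r1 r2 t1 t2, K r1 -> K r2 -> 0 <= t1 -> 0 <= t2 ->
      sigma t1 i = r1 -> sigma t2 i = r2 ->
      l * Rabs (r1 - r2) <= Rabs (t1 - t2) <= L * Rabs (r1 - r2).
Proof.
  intros HK Hpos. destruct (compact_in_pos_interval K HK Hpos) as [a [b [Ha Hab]]].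
  destruct (Kinf_small phi Hphi (a / 2)) as [d [Hd Hd']]; [lra |].
  assert (Hrange : forall i t r, K r -> 0 <= t -> sigma t i = r -> d <= t <= 2 * b).
  { intros i t r Hr Ht <-. destruct (Hab _ Hr). pose proof (sigma_bounds t Ht i).
    split; [| lra]. destruct (Rle_dec d t) as [Hdt | Hdt]; [exact Hdt |].
    pose proof (Hd' t Ht ltac:(lra)). lra. }
  destruct (sigma_bilipschitz_abs d (2 * b) Hd) as [l [L [Hl [HL HlL]]]].
  exists (/ (L + 1)), (Rmax (/ l) (/ (L + 1))).
  split; [apply Rinv_0_lt_compat; lra | split; [apply Rmax_r |]].
  intros i r1 r2 t1 t2 Hr1 Hr2 Ht1 Ht2 E1 E2.
  destruct (HlL i t2 t1 (Hrange i t2 r2 Hr2 Ht2 E2) (Hrange i t1 r1 Hr1 Ht1 E1)) as [Hlow Hup].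
  rewrite E1, E2 in *. pose proof (Rabs_pos (t1 - t2)). pose proof (Rabs_pos (r1 - r2)).
  split.
  - apply (Rmult_le_reg_l (L + 1)); [lra |]. rewrite <- Rmult_assoc, Rinv_r, Rmult_1_l by lra. nra.
  - apply Rle_trans with (/ l * Rabs (r1 - r2)); [| apply Rmult_le_compat_r; [lra | apply Rmax_l]].
    apply (Rmult_le_reg_l l); [exact Hl |]. rewrite <- Rmult_assoc, Rinv_r, Rmult_1_l by lra. lra.
Qed.

End BiLipschitzPaths.

Theorem theorem3p13 (I : Type) (Hne : inhabited I)
  (Hcount : exists f : I -> nat, forall x y, f x = f y -> x = y)
  (Ii : I -> list I) (gam : I -> I -> R -> R) (mu : I -> (I -> R) -> Rbar) :
  gain_operator Ii gam mu ->
  (exists rho, Kinf rho /\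
     MBI (Gam_rho Ii gam mu rho) /\
     forall r, 0 <= r ->
       (forall i, is_finite (sigma_star_Rbar Ii gam mu rho r i)) /\
       glob_attr_fixed_point
         (fun s => vmax (vconst r) (Gam_rho Ii gam mu rho s))
         (sigma_star Ii gam mu rho r)) ->
  exists sigma : R -> I -> R, path_strict_decay Ii gam mu sigma.
Proof.
  intros HG [rho [Hrho [[phi [Hphi Hmbi]] Hattr]]].
  assert (Hfix : forall r, 0 <= r ->
            glob_attr_fixed_point (T Ii gam mu rho r) (sigma_star Ii gam mu rho r))
    by (intros r Hr; apply Hattr, Hr).
  destruct (exists_decay_tolerances Ii gam mu HG rho Hrho Hfix) as [eta Heta].
  destruct (bilipschitz_approximation Hne (sigma_star Ii gam mu rho) phi Hphi
              (sstar_ge Ii gam mu rho Hfix) (sstar_le_phi Hne Ii gam mu rho phi Hmbi Hfix)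
              (sstar_le Ii gam mu HG rho Hrho Hfix)
              (sstar_uniform_continuity Hne Ii gam mu HG rho Hrho phi Hphi Hmbi Hfix)
              eta (fun n => proj1 (Heta n))) as [sigma [H0 [Hbounds [Hclose Hbilip]]]].
  exists sigma. split; [| split; [| split]].
  - exists (fun y => rho y / 2). split; [apply Kinf_half, Hrho |].
    apply (decay_of_close_path Ii gam mu HG rho Hrho eta);
      [intro n; apply Heta | exact H0 | exact Hclose].
  - exists (fun t => t / 2), phi.
    split; [apply (Kinf_half _ Kinf_id) | split; [exact Hphi | exact Hbounds]].
  - intro i. apply (sigma_Kinf sigma phi Hphi H0 Hbounds Hbilip).
  - apply (sigma_inverse_bilipschitz sigma phi Hphi Hbounds Hbilip).
Qed.
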